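(* Let $0\le\alpha<1$, $\mu\le\mu(\alpha)=\frac{(1-\alpha)^2}{4}$, $a_1,a_2\in\mathbb{R}$, and let $\alpha_1,\alpha_2$ be the eigenvalues of $A=\begin{pmatrix}0&a_1\\1&a_2\end{pmatrix}$ (labelled as in the context). Assume $$\lambda_{\alpha,\mu,n}-\lambda_{\alpha,\mu,l}\neq\alpha_1-\alpha_2\quad\text{for all }n,l\in\mathbb{N}^*,\ n\neq l.$$ Then the family $\{\lambda_{\alpha,\mu,n}-\alpha_1+\alpha_2,\ \lambda_{\alpha,\mu,n}\}_{n\ge1}=\{\lambda_{\alpha,\mu,n}+\alpha_2-\alpha_1: n\ge1\}\cup\{\lambda_{\alpha,\mu,n}:n\ge1\}$ can be arranged into a sequence $(\Lambda_{\alpha,\mu,n})_{n\ge1}$ of complex numbers satisfying: (1) $\Lambda_{\alpha,\mu,n}\neq\Lambda_{\alpha,\mu,m}$ for all $n\neq m$; (2) $\Re(\Lambda_{\alpha,\mu,n})>0$ for all $n\ge1$; (3) there is $\delta>0$ with $|\Im(\Lambda_{\alpha,\mu,n})|\le\delta\sqrt{\Re(\Lambda_{\alpha,\mu,n})}$ for all $n\ge1$; (4) $|\Lambda_{\alpha,\mu,n}|\le|\Lambda_{\alpha,\mu,n+1}|$ for all $n\ge1$; (5) there are $\varrho,q>0$ with $|\Lambda_{\alpha,\mu,n}-\Lambda_{\alpha,\mu,m}|\ge\varrho|n^2-m^2|$ for all $n,m$ with $|n-m|\ge q$, and $\inf_{n\neq m,\,|n-m|<q}|\Lambda_{\alpha,\mu,n}-\Lambda_{\alpha,\mu,m}|>0$;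 (6) there are $p,s>0$ with $|p\sqrt r-\mathcal N(r)|\le s$ for all $r>0$, where $\mathcal N(r)=\#\{n:|\Lambda_{\alpha,\mu,n}|\le r\}$.
   Context: $\nu(\alpha,\mu)=\frac{2}{2-\alpha}\sqrt{\mu(\alpha)-\mu}$, $(j_{\nu,n})_{n\ge1}$ is the increasing sequence of positive zeros of the Bessel function $J_\nu$, and $\lambda_{\alpha,\mu,n}=\left(\frac{2-\alpha}{2}\right)^2 j_{\nu(\alpha,\mu),n}^2$ (the Dirichlet eigenvalues of $-(x^\alpha\Phi')'-\mu x^{\alpha-2}\Phi$ on $(0,1)$). Labelling of eigenvalues of $A$: if $a_2^2+4a_1>0$, $\alpha_1=\frac12(a_2-\sqrt{a_2^2+4a_1})$, $\alpha_2=\frac12(a_2+\sqrt{a_2^2+4a_1})$; if $a_2^2+4a_1<0$, $\alpha_1=\frac12(a_2+i\sqrt{-(a_2^2+4a_1)})$, $\alpha_2=\frac12(a_2-i\sqrt{-(a_2^2+4a_1)})$; if $a_2^2+4a_1=0$, $\alpha_1=\alpha_2=a_2/2$ (in which case the family reduces to $\{\lambda_{\alpha,\mu,n}\}_{n\ge1}$). *)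

From Stdlib Require Import Reals Lra List.
From Coquelicot Require Import Coquelicot.
Open Scope R_scope.

Definition Gamma (x : R) : R :=
  RInt_gen (fun t => Rpower t (x - 1) * exp (- t)) (at_right 0) (Rbar_locally p_infty).

Definition BesselJ (nu x : R) : R :=
  Series (fun k : nat =>
    (-1) ^ k / (INR (Factorial.fact k) * Gamma (INR k + nu + 1))
      * (Rpower (x / 2) nu * (x / 2) ^ (2 * k))).

Definition is_pos_zeros_enum (f : R -> R) (j : nat -> R) : Prop :=
  (forall n, (1 <= n)%nat -> 0 < j n /\ f (j n) = 0) /\
  (forall n, (1 <= n)%nat -> j n < j (S n)) /\
  (forall x, 0 < x -> f x = 0 -> exists n, (1 <= n)%nat /\ j n = x).

Definition mu_crit (alpha : R) : R := (1 - alpha) ^ 2 / 4.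

Definition nu_am (alpha mu : R) : R := 2 / (2 - alpha) * sqrt (mu_crit alpha - mu).

Definition lambda_am (alpha : R) (j : nat -> R) (n : nat) : R :=
  ((2 - alpha) / 2) ^ 2 * (j n) ^ 2.

(* Eigenvalues of A = [[0, a1], [1, a2]] with the labelling of the paper. *)
Definition alpha1 (a1 a2 : R) : C :=
  let d := a2 ^ 2 + 4 * a1 in
  if Rlt_dec 0 d then RtoC ((a2 - sqrt d) / 2)
  else if Rlt_dec d 0 then (a2 / 2, sqrt (- d) / 2)%R
  else RtoC (a2 / 2).

Definition alpha2 (a1 a2 : R) : C :=
  let d := a2 ^ 2 + 4 * a1 in
  if Rlt_dec 0 d then RtoC ((a2 + sqrt d) / 2)
  else if Rlt_dec d 0 then (a2 / 2, - (sqrt (- d) / 2))%R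
  else RtoC (a2 / 2).

Definition count_le (Lam : nat -> C) (r : R) (N : nat) : Prop :=
  exists l : list nat, NoDup l /\ length l = N /\
    (forall n, In n l <-> ((1 <= n)%nat /\ Cmod (Lam n) <= r)).

From Stdlib Require Import Reals Lra List Lia Arith Ranalysis5.
From Coquelicot Require Import Coquelicot.
Open Scope R_scope.

(* Writing [J_nu x = (x/2)^nu / Gamma (nu + 1) * h (x^2/4)] with [h] an entire power
   series, [w x = x^(nu+1/2) h (x^2/4)] has the same positive zeros [j_n] and solves
   [w'' + (1 - (nu^2 - 1/4) / x^2) w = 0].  Sturm comparison with [sin (k x)] on
   [[j_n, j_(n+1)]] gives [j_(n+1) - j_n = PI + O(1/n^2)], so the gaps are bounded below and
   [j_n = PI n + O(1)].  Hence [lambda_n = c j_n^2] has [sqrt lambda_n = c' n + O(1)] and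
   gaps growing linearly in [n].  The shift [alpha2 - alpha1] has nonnegative real part, so
   [lambda_n] and [lambda_n + alpha2 - alpha1] are both nondecreasing in modulus; merging the
   two sequences by modulus yields [Lam] with [sqrt |Lam_n| = c' n / 2 + O(1)], which gives
   the separation (5) and the counting estimate (6).  The non-resonance hypothesis keeps the
   two families disjoint, and far from the diagonal the linear growth of the gaps of
   [lambda] keeps them uniformly apart. *)

(** * The Gamma function *)

Definition gamma_integrand (y t : R) : R := Rpower t (y - 1) * exp (- t).

Lemma Gamma_RInt_gen y :
  Gamma y = RInt_gen (gamma_integrand y) (at_right 0) (Rbar_locally p_infty).
Proof. reflexivity. Qed.

Lemma at_right_0_lt r : 0 < r -> at_right 0 (fun a => 0 < a < r).
Proof.
  intros Hr. exists (mkposreal r Hr). intros z Hz Hp.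
  assert (H : Rabs (z - 0) < r) by exact Hz. apply Rabs_def2 in H. simpl in H. lra.
Qed.

Lemma p_infty_gt r : Rbar_locally p_infty (fun b => r < b).
Proof. exists r. auto. Qed.

Lemma filter_prod_at_right_0_p_infty (P : R -> R -> Prop) :
  (forall a b, 0 < a < 1 -> 0 < b -> P a b) ->
  filter_prod (at_right 0) (Rbar_locally p_infty) (fun ab => P (fst ab) (snd ab)).
Proof.
  intros HP. apply (Filter_prod _ _ _ (fun a => 0 < a < 1) (fun b => 0 < b)).
  - apply at_right_0_lt; lra.
  - apply p_infty_gt.
  - intros a b Ha Hb. apply HP; auto.
Qed.

Lemma exp_le_compat x y : x <= y -> exp x <= exp y.
Proof. intros [H|H]. left; apply exp_increasing; auto. subst; lra. Qed.

Lemma continuous_gamma_integrand y t : 0 < t -> continuous (gamma_integrand y) t.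
Proof.
  intros Ht. apply (@ex_derive_continuous R_AbsRing R_NormedModule).
  unfold gamma_integrand, Rpower. auto_derive. lra.
Qed.

Lemma ex_RInt_gamma_integrand y a b : 0 < a -> 0 < b -> ex_RInt (gamma_integrand y) a b.
Proof.
  intros Ha Hb. apply (@ex_RInt_continuous R_CompleteNormedModule). intros z Hz.
  apply continuous_gamma_integrand. assert (Rmin a b > 0) by (apply Rmin_glb_lt; auto). lra.
Qed.

Lemma gamma_integrand_ge0 y t : 0 <= gamma_integrand y t.
Proof. apply Rmult_le_pos; left; apply exp_pos. Qed.

Lemma gamma_integrand_le1 y t : 1 <= y -> 0 < t <= 1 -> gamma_integrand y t <= 1.
Proof.
  intros Hy Ht. unfold gamma_integrand, Rpower.
  assert (ln t <= 0) by (rewrite <- ln_1; apply ln_le; lra).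
  assert (exp ((y - 1) * ln t) <= 1) by (rewrite <- exp_0 at 2; apply exp_le_compat; nra).
  assert (exp (- t) <= 1) by (rewrite <- exp_0; apply exp_le_compat; lra).
  apply (Rle_trans _ (1 * 1)); [|lra].
  apply Rmult_le_compat; auto; left; apply exp_pos.
Qed.

Lemma ln_le_2sqrt t : 0 < t -> ln t <= 2 * sqrt t.
Proof.
  intros Ht. assert (Hs : 0 < sqrt t) by (apply sqrt_lt_R0; auto).
  replace (ln t) with (2 * ln (sqrt t)).
  - assert (H := exp_ineq1_le (ln (sqrt t))). rewrite exp_ln in H; auto. lra.
  - rewrite <- (sqrt_sqrt t) at 2 by lra. rewrite ln_mult; auto. ring.
Qed.

Lemma mul_ln_sub_le Y t : 0 <= Y -> 0 < t -> Y * ln t - t <= 2 * Y * Y - t / 2.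
Proof.
  intros HY Ht. assert (H := ln_le_2sqrt t Ht).
  assert (Hs := sqrt_sqrt t ltac:(lra)). assert (Hs0 := sqrt_pos t).
  assert (Y * ln t <= Y * (2 * sqrt t)) by (apply Rmult_le_compat_l; auto).
  assert (0 <= (Y - sqrt t / 2) * (Y - sqrt t / 2)) by apply Rle_0_sqr.
  nra.
Qed.

Lemma gamma_integrand_tail y t : 1 <= y -> 1 <= t ->
  gamma_integrand y t <= exp (2 * (y + 1) * (y + 1)) / (t * t).
Proof.
  intros Hy Ht. unfold gamma_integrand, Rpower.
  assert (Heq : exp ((y - 1) * ln t) * exp (- t) * (t * t) = exp ((y + 1) * ln t - t)).
  { replace (t * t) with (exp (ln t) * exp (ln t)) by (rewrite exp_ln; lra).
    rewrite <- !exp_plus. f_equal. ring. }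
  assert (exp ((y + 1) * ln t - t) <= exp (2 * (y + 1) * (y + 1))).
  { apply exp_le_compat. assert (H := mul_ln_sub_le (y + 1) t ltac:(lra) ltac:(lra)). lra. }
  apply (Rmult_le_reg_r (t * t)). nra.
  rewrite Heq. unfold Rdiv. rewrite Rmult_assoc, Rinv_l by nra. lra.
Qed.

Lemma RInt_gamma_integrand_tail y b b' : 1 <= y -> 1 <= b -> b <= b' ->
  RInt (gamma_integrand y) b b' <= exp (2 * (y + 1) * (y + 1)) / b.
Proof.
  intros Hy Hb Hbb. set (C := exp (2 * (y + 1) * (y + 1))).
  assert (HC : 0 < C) by apply exp_pos.
  assert (Hint : is_RInt (fun t => C / (t * t)) b b' (minus (- C / b') (- C / b))).
  { apply (is_RInt_derive (fun t => - C / t)).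
    - intros x Hx. rewrite Rmin_left, Rmax_right in Hx by lra.
      auto_derive. lra. field. lra.
    - intros x Hx. rewrite Rmin_left, Rmax_right in Hx by lra.
      apply (@ex_derive_continuous R_AbsRing R_NormedModule). auto_derive. nra. }
  apply (Rle_trans _ (RInt (fun t => C / (t * t)) b b')).
  - apply RInt_le; auto. apply ex_RInt_gamma_integrand; lra. eexists; exact Hint.
    intros x Hx. apply gamma_integrand_tail; lra.
  - rewrite (is_RInt_unique _ _ _ _ Hint). unfold minus, plus, opp; simpl.
    assert (0 < C / b') by (apply Rdiv_lt_0_compat; lra). unfold Rdiv in *. lra.
Qed.

Lemma abs_RInt_gamma_integrand_tail y b b' : 1 <= y -> 1 <= b -> 1 <= b' ->
  Rabs (RInt (gamma_integrand y) b b') <= exp (2 * (y + 1) * (y + 1)) / Rmin b b'.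
Proof.
  intros Hy Hb Hb'.
  assert (Hge : forall u v, 1 <= u <= v -> 0 <= RInt (gamma_integrand y) u v).
  { intros u v Huv. apply RInt_ge_0; [lra | apply ex_RInt_gamma_integrand; lra |].
    intros; apply gamma_integrand_ge0. }
  destruct (Rle_lt_dec b b') as [H|H].
  - rewrite Rmin_left, Rabs_pos_eq by (auto || apply Hge; lra).
    apply RInt_gamma_integrand_tail; lra.
  - rewrite Rmin_right by lra. rewrite <- opp_RInt_swap by (apply ex_RInt_gamma_integrand; lra).
    unfold opp; simpl. rewrite Rabs_Ropp, Rabs_pos_eq by (apply Hge; lra).
    apply RInt_gamma_integrand_tail; lra.
Qed.

Lemma abs_RInt_gamma_integrand_head y a a' : 1 <= y -> 0 < a <= 1 -> 0 < a' <= 1 ->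
  Rabs (RInt (gamma_integrand y) a a') <= Rabs (a' - a).
Proof.
  intros Hy Ha Ha'.
  assert (Hle : forall u v, 0 < u <= v -> v <= 1 -> Rabs (RInt (gamma_integrand y) u v) <= v - u).
  { intros u v Huv Hv. rewrite <- (Rmult_1_r (v - u)).
    apply abs_RInt_le_const; [lra | apply ex_RInt_gamma_integrand; lra |].
    intros t Ht. rewrite Rabs_pos_eq by apply gamma_integrand_ge0.
    apply gamma_integrand_le1; lra. }
  destruct (Rle_lt_dec a a') as [H|H].
  - rewrite (Rabs_pos_eq (a' - a)) by lra. apply Hle; lra.
  - rewrite <- opp_RInt_swap by (apply ex_RInt_gamma_integrand; lra).
    unfold opp; simpl. rewrite Rabs_Ropp, (Rabs_left (a' - a)) by lra.
    replace (- (a' - a)) with (a - a') by ring. apply Hle; lra.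
Qed.

Lemma RInt_gamma_integrand_cauchy y a b a' b' : 1 <= y ->
  0 < a <= 1 -> 0 < a' <= 1 -> 1 <= b -> 1 <= b' ->
  Rabs (RInt (gamma_integrand y) a' b' - RInt (gamma_integrand y) a b)
    <= Rabs (a - a') + exp (2 * (y + 1) * (y + 1)) / Rmin b b'.
Proof.
  intros Hy Ha Ha' Hb Hb'.
  assert (Hex : forall u v, 0 < u -> 0 < v -> ex_RInt (gamma_integrand y) u v)
    by (intros; apply ex_RInt_gamma_integrand; auto).
  assert (Hch : RInt (gamma_integrand y) a' b' =
      RInt (gamma_integrand y) a' a + RInt (gamma_integrand y) a b + RInt (gamma_integrand y) b b').
  { assert (E1 := RInt_Chasles (V := R_CompleteNormedModule) (gamma_integrand y) a' b b'
                    (Hex a' b ltac:(lra) ltac:(lra)) (Hex b b' ltac:(lra) ltac:(lra))).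
    assert (E2 := RInt_Chasles (V := R_CompleteNormedModule) (gamma_integrand y) a' a b
                    (Hex a' a ltac:(lra) ltac:(lra)) (Hex a b ltac:(lra) ltac:(lra))).
    unfold plus in E1, E2; simpl in E1, E2. lra. }
  rewrite Hch.
  replace (_ + _ + _ - _) with (RInt (gamma_integrand y) a' a + RInt (gamma_integrand y) b b')
    by ring.
  eapply Rle_trans; [apply Rabs_triang|]. apply Rplus_le_compat.
  - apply abs_RInt_gamma_integrand_head; auto.
  - apply abs_RInt_gamma_integrand_tail; auto.
Qed.

Lemma RInt_gamma_integrand_cauchy_lt y eps a b a' b' : 1 <= y -> 0 < eps ->
  let C := exp (2 * (y + 1) * (y + 1)) in
  0 < a < Rmin 1 (eps / 3) -> 0 < a' < Rmin 1 (eps / 3) ->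
  Rmax 1 (3 * C / eps) < b -> Rmax 1 (3 * C / eps) < b' ->
  Rabs (RInt (gamma_integrand y) a' b' - RInt (gamma_integrand y) a b) < eps.
Proof.
  intros Hy He C Ha Ha' Hb Hb'. assert (HC : 0 < C) by apply exp_pos.
  assert (Hm1 := Rmin_l 1 (eps / 3)). assert (Hm2 := Rmin_r 1 (eps / 3)).
  assert (HM1 := Rmax_l 1 (3 * C / eps)). assert (HM2 := Rmax_r 1 (3 * C / eps)).
  eapply Rle_lt_trans; [apply RInt_gamma_integrand_cauchy; lra|]. fold C.
  assert (Hab : Rabs (a - a') < eps / 3 + eps / 3) by (apply Rabs_def1; lra).
  assert (Hmin : 3 * C / eps < Rmin b b') by (apply Rmin_glb_lt; lra).
  assert (H3 : 0 < 3 * C / eps) by (apply Rdiv_lt_0_compat; lra).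
  assert (C / Rmin b b' < eps / 3).
  { replace (eps / 3) with (C / (3 * C / eps)) by (field; lra).
    unfold Rdiv at 1 2. apply Rmult_lt_compat_l; [lra|].
    apply Rinv_lt_contravar; [apply Rmult_lt_0_compat|]; lra. }
  lra.
Qed.

Lemma ex_RInt_gen_gamma y : 1 <= y ->
  ex_RInt_gen (gamma_integrand y) (at_right 0) (Rbar_locally p_infty).
Proof.
  intros Hy.
  assert (Hdet : filter_prod (at_right 0) (Rbar_locally p_infty) (fun ab =>
     (exists l, is_RInt (gamma_integrand y) (fst ab) (snd ab) l) /\
     (forall l1 l2, is_RInt (gamma_integrand y) (fst ab) (snd ab) l1 ->
        is_RInt (gamma_integrand y) (fst ab) (snd ab) l2 -> l1 = l2))).
  { apply (filter_prod_at_right_0_p_infty (fun a b =>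
       (exists l, is_RInt (gamma_integrand y) a b l) /\
       (forall l1 l2, is_RInt (gamma_integrand y) a b l1 ->
          is_RInt (gamma_integrand y) a b l2 -> l1 = l2))).
    intros a b Ha Hb. split.
    - exists (RInt (gamma_integrand y) a b).
      apply (RInt_correct (V := R_CompleteNormedModule)), ex_RInt_gamma_integrand; lra.
    - intros l1 l2 H1 H2. rewrite <- (is_RInt_unique _ _ _ _ H1), <- (is_RInt_unique _ _ _ _ H2).
      reflexivity. }
  destruct (proj1 (filterlimi_locally_cauchy (U := R_CompleteSpace)
     (F := filter_prod (at_right 0) (Rbar_locally p_infty))
     (fun ab l => is_RInt (gamma_integrand y) (fst ab) (snd ab) l) Hdet)) as [l Hl].
  2: { exists l; exact Hl. }
  intros eps. assert (He : 0 < eps) by apply cond_pos.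
  set (C := exp (2 * (y + 1) * (y + 1))).
  exists (fun ab => 0 < fst ab < Rmin 1 (eps / 3) /\ Rmax 1 (3 * C / eps) < snd ab). split.
  - apply (Filter_prod _ _ _ (fun a => 0 < a < Rmin 1 (eps / 3)) (fun b => Rmax 1 (3 * C / eps) < b)).
    + apply at_right_0_lt, Rmin_pos; lra.
    + apply p_infty_gt.
    + intros a b Ha Hb; simpl; auto.
  - intros [a b] [a' b'] [Ha Hb] [Ha' Hb'] u v Hu Hv. simpl in *.
    rewrite <- (is_RInt_unique _ _ _ _ Hu), <- (is_RInt_unique _ _ _ _ Hv).
    apply RInt_gamma_integrand_cauchy_lt; auto.
Qed.

Lemma power_exp_lim_0 y : 1 <= y ->
  filterlim (fun t => exp (y * ln t - t)) (at_right 0) (locally 0).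
Proof.
  intros Hy. apply (filterlim_locally (F := at_right 0)). intros eps.
  assert (He : 0 < eps) by apply cond_pos.
  eapply filter_imp; [|apply (at_right_0_lt (Rmin 1 eps)), Rmin_pos; lra].
  intros t Ht. assert (Hm1 := Rmin_l 1 eps). assert (Hm2 := Rmin_r 1 eps).
  change (Rabs (exp (y * ln t - t) - 0) < eps).
  assert (ln t <= 0) by (rewrite <- ln_1; apply ln_le; lra).
  assert (Hle : exp (y * ln t - t) <= exp (ln t)) by (apply exp_le_compat; nra).
  rewrite exp_ln in Hle by lra. rewrite Rminus_0_r, Rabs_pos_eq by (left; apply exp_pos). lra.
Qed.

Lemma power_exp_lim_p_infty y : 1 <= y ->
  filterlim (fun t => exp (y * ln t - t)) (Rbar_locally p_infty) (locally 0).
Proof.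
  intros Hy. apply (filterlim_locally (F := Rbar_locally p_infty)). intros eps.
  assert (He : 0 < eps) by apply cond_pos.
  set (C := exp (2 * y * y)). assert (HC : 0 < C) by apply exp_pos.
  exists (Rmax 1 (2 * C / eps)). intros t Ht.
  assert (HM1 := Rmax_l 1 (2 * C / eps)). assert (HM2 := Rmax_r 1 (2 * C / eps)).
  change (Rabs (exp (y * ln t - t) - 0) < eps).
  rewrite Rminus_0_r, Rabs_pos_eq by (left; apply exp_pos).
  assert (H1 : exp (y * ln t - t) <= C * exp (- (t / 2))).
  { unfold C. rewrite <- exp_plus. apply exp_le_compat.
    assert (H := mul_ln_sub_le y t ltac:(lra) ltac:(lra)). lra. }
  assert (H2 : exp (- (t / 2)) <= 2 / t).
  { rewrite exp_Ropp. assert (H := exp_ineq1_le (t / 2)). assert (0 < exp (t / 2)) by apply exp_pos.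
    apply (Rmult_le_reg_r (exp (t / 2) * t)). nra.
    replace (/ exp (t / 2) * (exp (t / 2) * t)) with t by (field; lra).
    replace (2 / t * (exp (t / 2) * t)) with (2 * exp (t / 2)) by (field; lra). lra. }
  assert (H3 : C * (2 / t) < eps).
  { apply (Rmult_lt_reg_r (t / eps)). apply Rdiv_lt_0_compat; lra.
    replace (C * (2 / t) * (t / eps)) with (2 * C / eps) by (field; lra).
    replace (eps * (t / eps)) with t by (field; lra). lra. }
  assert (C * exp (- (t / 2)) <= C * (2 / t)) by (apply Rmult_le_compat_l; lra).
  lra.
Qed.

Lemma is_RInt_gen_power_exp_derive y : 1 <= y ->
  is_RInt_gen (fun t => exp (y * ln t - t) * (y / t - 1)) (at_right 0) (Rbar_locally p_infty) 0.
Proof.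
  intros Hy.
  set (F := fun t => exp (y * ln t - t)).
  set (dF := fun t => exp (y * ln t - t) * (y / t - 1)).
  assert (HdF : forall t, 0 < t -> is_derive F t (dF t)).
  { intros t Ht. unfold F, dF. auto_derive; [lra | unfold Rminus; field; lra]. }
  assert (Hbetween : forall a b x, 0 < a < 1 -> 0 < b -> Rmin a b <= x <= Rmax a b -> 0 < x).
  { intros a b x Ha Hb Hx. assert (Rmin a b > 0) by (apply Rmin_glb_lt; lra). lra. }
  assert (HD : is_RInt_gen (Derive F) (at_right 0) (Rbar_locally p_infty) (0 - 0)).
  { apply is_RInt_gen_Derive.
    - apply (filter_prod_at_right_0_p_infty
               (fun a b => forall x, Rmin a b <= x <= Rmax a b -> ex_derive F x)).
      intros a b Ha Hb x Hx. eexists. apply HdF. eapply Hbetween; eauto.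
    - apply (filter_prod_at_right_0_p_infty
               (fun a b => forall x, Rmin a b <= x <= Rmax a b -> continuous (Derive F) x)).
      intros a b Ha Hb x Hx. assert (Hx0 := Hbetween a b x Ha Hb Hx).
      apply (continuous_ext_loc (Derive F) dF).
      + exists (mkposreal x Hx0). intros z Hz.
        assert (H : Rabs (z - x) < x) by exact Hz. apply Rabs_def2 in H. simpl in H.
        symmetry. apply is_derive_unique, HdF. lra.
      + apply (@ex_derive_continuous R_AbsRing R_NormedModule). unfold dF. auto_derive. lra.
    - apply power_exp_lim_0; auto.
    - apply power_exp_lim_p_infty; auto. }
  rewrite Rminus_0_r in HD. apply (is_RInt_gen_ext (Derive F)); [|exact HD].
  apply (filter_prod_at_right_0_p_infty
           (fun a b => forall x, Rmin a b < x < Rmax a b -> Derive F x = dF x)).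
  intros a b Ha Hb x Hx. apply is_derive_unique, HdF. eapply Hbetween; eauto; lra.
Qed.

(* [(t^y e^(-t))' = y t^(y-1) e^(-t) - t^y e^(-t)] integrates to [0]. *)
Lemma Gamma_succ y : 1 <= y -> Gamma (y + 1) = y * Gamma y.
Proof.
  intros Hy.
  assert (HG := RInt_gen_correct _ (ex_RInt_gen_gamma y Hy)). rewrite <- Gamma_RInt_gen in HG.
  assert (H := is_RInt_gen_minus _ _ _ _ (is_RInt_gen_scal _ y _ HG)
                 (is_RInt_gen_power_exp_derive y Hy)).
  replace (y * Gamma y) with (minus (scal y (Gamma y)) 0)
    by (unfold minus, plus, opp, scal; simpl; unfold mult; simpl; ring).
  rewrite Gamma_RInt_gen. apply is_RInt_gen_unique.
  eapply is_RInt_gen_ext; [| exact H].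
  apply (filter_prod_at_right_0_p_infty (fun a b => forall x, Rmin a b < x < Rmax a b -> _ = _)).
  intros a b Ha Hb x Hx. assert (Rmin a b > 0) by (apply Rmin_glb_lt; lra).
  assert (Hx0 : 0 < x) by lra.
  unfold scal, minus, plus, opp; simpl. unfold mult; simpl. unfold gamma_integrand, Rpower.
  replace (y + 1 - 1) with y by ring.
  replace ((y - 1) * ln x) with (y * ln x + - ln x) by ring.
  replace (y * ln x - x) with (y * ln x + - x) by ring.
  rewrite !exp_plus, (exp_Ropp (ln x)), exp_ln by lra.
  field. lra.
Qed.

(** * Bessel functions in Liouville normal form *)

Fixpoint pochhammer (a : R) (k : nat) : R :=
  match k with 0%nat => 1 | S k' => pochhammer a k' * (a + INR k') end.

Lemma pochhammer_pos a k : 0 < a -> 0 < pochhammer a k.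
Proof.
  intros Ha. induction k; simpl. lra. assert (H := pos_INR k). apply Rmult_lt_0_compat; lra.
Qed.

Lemma Gamma_add_nat a k : 1 <= a -> Gamma (a + INR k) = Gamma a * pochhammer a k.
Proof.
  intros Ha. induction k.
  - simpl. rewrite Rplus_0_r. ring.
  - change (pochhammer a (S k)) with (pochhammer a k * (a + INR k)).
    rewrite S_INR, <- Rplus_assoc, Gamma_succ, IHk by (assert (H := pos_INR k); lra). ring.
Qed.

Definition bessel_coef (nu : R) (k : nat) : R :=
  (-1) ^ k / (INR (Factorial.fact k) * pochhammer (nu + 1) k).

Lemma bessel_coef_neq0 nu k : 0 <= nu -> bessel_coef nu k <> 0.
Proof.
  intros Hn. assert (HP := pochhammer_pos (nu + 1) k ltac:(lra)).
  assert (HF := INR_fact_lt_0 k). unfold bessel_coef, Rdiv.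
  apply Rmult_integral_contrapositive. split.
  - apply pow_nonzero. lra.
  - apply Rinv_neq_0_compat. nra.
Qed.

Lemma bessel_coef_S nu k : 0 <= nu ->
  bessel_coef nu (S k) = - bessel_coef nu k / (INR (S k) * (INR k + nu + 1)).
Proof.
  intros Hn. assert (HP := pochhammer_pos (nu + 1) k ltac:(lra)).
  assert (HF := INR_fact_lt_0 k). assert (Hk := pos_INR k).
  unfold bessel_coef. simpl pochhammer. rewrite fact_simpl, mult_INR, S_INR. simpl pow.
  field. repeat split; lra.
Qed.

Lemma CV_radius_bessel_coef nu : 0 <= nu -> CV_radius (bessel_coef nu) = p_infty.
Proof.
  intros Hn. apply CV_radius_infinite_DAlembert; [intros; apply bessel_coef_neq0; auto|].
  apply (is_lim_seq_le_le (fun _ => 0) _ (fun n => / INR (S n))).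
  - intros n. rewrite bessel_coef_S by auto.
    assert (Hb := bessel_coef_neq0 nu n Hn). assert (Hk := pos_INR n). rewrite S_INR.
    replace (- bessel_coef nu n / ((INR n + 1) * (INR n + nu + 1)) / bessel_coef nu n)
      with (- / ((INR n + 1) * (INR n + nu + 1))) by (field; repeat split; lra).
    rewrite Rabs_Ropp, Rabs_pos_eq by (left; apply Rinv_0_lt_compat; nra).
    split; [left; apply Rinv_0_lt_compat; nra|].
    apply Rinv_le_contravar; nra.
  - apply is_lim_seq_const.
  - replace (Finite 0) with (Rbar_inv p_infty) by reflexivity.
    apply (is_lim_seq_inv (fun n => INR (S n))); [|discriminate].
    apply (is_lim_seq_incr_1 INR p_infty), is_lim_seq_INR.
Qed.

(* Division by [0] gives [0] in [R], so every term of the series would vanish. *)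
Lemma BesselJ_Gamma_eq0 nu x : 0 <= nu -> Gamma (nu + 1) = 0 -> BesselJ nu x = 0.
Proof.
  intros Hn HG. unfold BesselJ.
  rewrite (Series_ext _ (fun n => 0 * 0)), Series_scal_l; [ring|].
  intros n. replace (INR n + nu + 1) with (nu + 1 + INR n) by ring.
  rewrite Gamma_add_nat, HG, Rmult_0_l, Rmult_0_r by lra.
  unfold Rdiv. rewrite Rinv_0. ring.
Qed.

Lemma BesselJ_PSeries nu x : 0 <= nu -> Gamma (nu + 1) <> 0 ->
  BesselJ nu x = Rpower (x / 2) nu / Gamma (nu + 1) * PSeries (bessel_coef nu) (x * x / 4).
Proof.
  intros Hn HG. unfold BesselJ, PSeries. rewrite <- Series_scal_l. apply Series_ext. intros k.
  replace (INR k + nu + 1) with (nu + 1 + INR k) by ring.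
  rewrite Gamma_add_nat, pow_mult by lra. unfold bessel_coef.
  replace ((x / 2) ^ 2) with (x * x / 4) by field.
  assert (HP := pochhammer_pos (nu + 1) k ltac:(lra)). assert (HF := INR_fact_lt_0 k).
  field. repeat split; lra.
Qed.

Section BesselODE.
Variable nu : R.
Hypothesis Hnu : 0 <= nu.

Let b := bessel_coef nu.
Let h t := PSeries b t.
Let h1 t := PSeries (PS_derive b) t.
Let h2 t := PSeries (PS_derive (PS_derive b)) t.

Lemma is_pseries_bessel_coef_derive t : is_pseries (PS_derive b) t (h1 t).
Proof.
  apply PSeries_correct, CV_radius_inside. rewrite CV_radius_derive.
  unfold b. rewrite CV_radius_bessel_coef by auto. exact I.
Qed.

Lemma is_pseries_bessel_coef t : is_pseries b t (h t).
Proof.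
  apply PSeries_correct, CV_radius_inside.
  unfold b. rewrite CV_radius_bessel_coef by auto. exact I.
Qed.

Lemma is_pseries_bessel_coef_derive2 t : is_pseries (PS_derive (PS_derive b)) t (h2 t).
Proof.
  apply PSeries_correct, CV_radius_inside. rewrite !CV_radius_derive.
  unfold b. rewrite CV_radius_bessel_coef by auto. exact I.
Qed.

Lemma is_derive_bessel_series t : is_derive h t (h1 t).
Proof.
  apply is_derive_PSeries. unfold b. rewrite CV_radius_bessel_coef by auto. exact I.
Qed.

Lemma is_derive_bessel_series_derive t : is_derive h1 t (h2 t).
Proof.
  apply is_derive_PSeries. rewrite CV_radius_derive.
  unfold b. rewrite CV_radius_bessel_coef by auto. exact I.
Qed.

(* The coefficient recurrence of [bessel_coef] is the confluent ODE
   [t h'' + (nu + 1) h' + h = 0] read off term by term. *)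
Lemma bessel_confluent_ode t : t * h2 t + (nu + 1) * h1 t + h t = 0.
Proof.
  assert (H := is_pseries_plus _ _ _ _ _
    (is_pseries_plus _ _ _ _ _ (is_pseries_incr_1 _ _ _ (is_pseries_bessel_coef_derive2 t))
       (is_pseries_scal (nu + 1) _ _ _ (Rmult_comm _ _) (is_pseries_bessel_coef_derive t)))
    (is_pseries_bessel_coef t)).
  apply is_pseries_unique in H. unfold plus, scal in H; simpl in H; unfold mult in H; simpl in H.
  rewrite <- H.
  rewrite (PSeries_ext _ (fun _ => 0)).
  - unfold PSeries. rewrite (Series_ext _ (fun n => 0 * 0)), Series_scal_l; [ring | intros; ring].
  - intros n. unfold PS_plus, PS_scal, PS_incr_1, plus, scal, zero; simpl.
    unfold mult; simpl. unfold PS_derive, b.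
    destruct n as [|m]; rewrite bessel_coef_S by auto.
    + simpl. field. lra.
    + assert (Hm := pos_INR m).
      rewrite bessel_coef_S by auto. rewrite !S_INR. field. repeat split; lra.
Qed.

(* [bessel_normal x = 2^nu Gamma (nu + 1) sqrt x J_nu(x)], see [BesselJ_PSeries]. *)
Definition bessel_normal (x : R) : R := Rpower x (nu + 1 / 2) * h (x * x / 4).

Definition bessel_normal_derive (x : R) : R :=
  Rpower x (nu + 1 / 2) * ((nu + 1 / 2) / x * h (x * x / 4) + x / 2 * h1 (x * x / 4)).

Lemma is_derive_bessel_series_sq x : is_derive (fun x => h (x * x / 4)) x (x / 2 * h1 (x * x / 4)).
Proof.
  replace (x / 2 * h1 (x * x / 4)) with ((1 * x + x * 1) / 4 * h1 (x * x / 4)) by field.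
  apply (is_derive_comp h (fun x => x * x / 4)); [apply is_derive_bessel_series | auto_derive; auto].
Qed.

Lemma is_derive_bessel_series_derive_sq x :
  is_derive (fun x => x / 2 * h1 (x * x / 4)) x
    (1 / 2 * h1 (x * x / 4) + x / 2 * (x / 2 * h2 (x * x / 4))).
Proof.
  assert (H1 : is_derive (fun x => h1 (x * x / 4)) x (x / 2 * h2 (x * x / 4))).
  { replace (x / 2 * h2 (x * x / 4)) with ((1 * x + x * 1) / 4 * h2 (x * x / 4)) by field.
    apply (is_derive_comp h1 (fun x => x * x / 4));
      [apply is_derive_bessel_series_derive | auto_derive; auto]. }
  apply (is_derive_mult (fun x => x / 2) (fun x => h1 (x * x / 4))); [|exact H1|apply Rmult_comm].
  auto_derive; auto.
Qed.

Lemma is_derive_bessel_normal x : 0 < x -> is_derive bessel_normal x (bessel_normal_derive x).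
Proof.
  intros Hx. unfold bessel_normal, bessel_normal_derive, Rpower.
  replace (exp ((nu + 1 / 2) * ln x) * ((nu + 1 / 2) / x * h (x * x / 4) + x / 2 * h1 (x * x / 4)))
    with (exp ((nu + 1 / 2) * ln x) * ((nu + 1 / 2) / x) * h (x * x / 4)
          + exp ((nu + 1 / 2) * ln x) * (x / 2 * h1 (x * x / 4))) by ring.
  apply (is_derive_mult (fun x => exp ((nu + 1 / 2) * ln x)) (fun x => h (x * x / 4)));
    [| apply is_derive_bessel_series_sq | apply Rmult_comm].
  auto_derive; [lra | field; lra].
Qed.

Lemma is_derive_bessel_normal_derive x : 0 < x ->
  is_derive bessel_normal_derive x (- (1 - (nu * nu - 1 / 4) / (x * x)) * bessel_normal x).
Proof.
  intros Hx. unfold bessel_normal, bessel_normal_derive.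
  assert (Hp : is_derive (fun x => Rpower x (nu + 1 / 2)) x
                 ((nu + 1 / 2) / x * Rpower x (nu + 1 / 2))).
  { unfold Rpower. auto_derive; [lra | field; lra]. }
  assert (Hq : is_derive (fun x => (nu + 1 / 2) / x) x (- ((nu + 1 / 2) / (x * x)))).
  { auto_derive; [lra | field; lra]. }
  assert (Hs := is_derive_plus _ _ _ _ _
     (is_derive_mult _ _ _ _ _ Hq (is_derive_bessel_series_sq x) Rmult_comm)
     (is_derive_bessel_series_derive_sq x)).
  assert (Hode := bessel_confluent_ode (x * x / 4)).
  assert (H := is_derive_mult _ _ _ _ _ Hp Hs Rmult_comm).
  unfold plus, mult in H; simpl in H.
  replace (- (1 - (nu * nu - 1 / 4) / (x * x)) * (Rpower x (nu + 1 / 2) * h (x * x / 4)))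
    with ((nu + 1 / 2) / x * Rpower x (nu + 1 / 2) *
            ((nu + 1 / 2) / x * h (x * x / 4) + x / 2 * h1 (x * x / 4)) +
          Rpower x (nu + 1 / 2) *
            (- ((nu + 1 / 2) / (x * x)) * h (x * x / 4) + (nu + 1 / 2) / x * (x / 2 * h1 (x * x / 4)) +
             (1 / 2 * h1 (x * x / 4) + x / 2 * (x / 2 * h2 (x * x / 4))))).
  - exact H.
  - replace (h2 (x * x / 4)) with ((- (nu + 1) * h1 (x * x / 4) - h (x * x / 4)) / (x * x / 4))
      by (field_simplify_eq; [lra | nra]).
    field. lra.
Qed.

Lemma BesselJ_eq0_iff x : 0 < x -> Gamma (nu + 1) <> 0 ->
  (BesselJ nu x = 0 <-> bessel_normal x = 0).
Proof.
  intros Hx HG. rewrite BesselJ_PSeries by auto. unfold bessel_normal.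
  assert (H1 : 0 < Rpower (x / 2) nu) by (unfold Rpower; apply exp_pos).
  assert (H2 : 0 < Rpower x (nu + 1 / 2)) by (unfold Rpower; apply exp_pos).
  assert (H3 : Rpower (x / 2) nu / Gamma (nu + 1) <> 0)
    by (unfold Rdiv; apply Rmult_integral_contrapositive; split; [lra | apply Rinv_neq_0_compat; auto]).
  change (PSeries (bessel_coef nu) (x * x / 4)) with (h (x * x / 4)).
  split; intros H.
  - apply Rmult_integral in H. destruct H as [H|H]; [contradiction|]. rewrite H. ring.
  - apply Rmult_integral in H. destruct H as [H|H]; [lra|]. rewrite H. ring.
Qed.
End BesselODE.

(** * Sturm comparison *)

Lemma root_left_of_pos_derive (u : R -> R) (a b l : R) :
  a < b -> is_derive u b l -> 0 < l -> u b = 0 -> exists x, a < x < b /\ u x < 0.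
Proof.
  intros Hab Hd Hl Hu. apply is_derive_Reals in Hd.
  destruct (Hd l Hl) as [[del Hdel] Hh].
  set (h := - Rmin del (b - a) / 2).
  assert (Hm1 : 0 < Rmin del (b - a)) by (apply Rmin_pos; lra).
  assert (Hm2 := Rmin_l del (b - a)). assert (Hm3 := Rmin_r del (b - a)).
  assert (Hh0 : h <> 0) by (unfold h; lra).
  assert (Habs : Rabs h < del) by (rewrite Rabs_left; unfold h; lra).
  specialize (Hh h Hh0 Habs). rewrite Hu, Rminus_0_r in Hh.
  exists (b + h). split; [unfold h; lra|].
  apply Rabs_def2 in Hh. destruct Hh as [_ Hh].
  assert (Hq : 0 < u (b + h) / h) by lra.
  destruct (Rlt_le_dec (u (b + h)) 0) as [H|H]; auto.
  exfalso. assert (/ h < 0) by (apply Rinv_lt_0_compat; unfold h; lra).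
  unfold Rdiv in Hq. nra.
Qed.

Section SturmComparison.
Variables (u u1 q : R -> R) (a b : R).
Hypothesis Hab : a < b.
Hypothesis Hu : forall x, a <= x <= b -> is_derive u x (u1 x).
Hypothesis Hu1 : forall x, a <= x <= b -> is_derive u1 x (- q x * u x).
Hypothesis Hua : u a = 0.
Hypothesis Hpos : forall x, a < x < b -> 0 < u x.

(* The Wronskian of [u] and [sin (k (x - a))], a solution of [v'' + k^2 v = 0]. *)
Let W k x := u1 x * sin (k * (x - a)) - u x * (k * cos (k * (x - a))).

Lemma is_derive_wronskian k x : a <= x <= b ->
  is_derive (W k) x ((k * k - q x) * u x * sin (k * (x - a))).
Proof.
  intros Hx. unfold W.
  assert (Hs : is_derive (fun x => sin (k * (x - a))) x (k * cos (k * (x - a))))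
    by (auto_derive; [auto | unfold Rminus; ring]).
  assert (Hc : is_derive (fun x => k * cos (k * (x - a))) x (- (k * k) * sin (k * (x - a))))
    by (auto_derive; [auto | unfold Rminus; ring]).
  assert (H := is_derive_minus _ _ _ _ _
     (is_derive_mult _ _ _ _ _ (Hu1 x Hx) Hs Rmult_comm)
     (is_derive_mult _ _ _ _ _ (Hu x Hx) Hc Rmult_comm)).
  unfold minus, plus, opp, mult in H; simpl in H.
  replace ((k * k - q x) * u x * sin (k * (x - a))) with
    (- q x * u x * sin (k * (x - a)) + u1 x * (k * cos (k * (x - a))) +
     - (u1 x * (k * cos (k * (x - a))) + u x * (- (k * k) * sin (k * (x - a))))) by ring.
  exact H.
Qed.

Lemma wronskian_mvt k b' : a < b' <= b -> exists c, a < c < b' /\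
  W k b' - W k a = (k * k - q c) * u c * sin (k * (c - a)) * (b' - a).
Proof.
  intros Hb'.
  destruct (MVT_cor2 (W k) (fun x => (k * k - q x) * u x * sin (k * (x - a))) a b')
    as [c [Hc1 Hc2]]; [lra | |].
  - intros c Hc. apply is_derive_Reals, is_derive_wronskian; lra.
  - exists c. split; auto.
Qed.

Lemma sturm_gap_ge M : 0 < M -> u b = 0 -> (forall x, a < x < b -> q x < M) ->
  PI / sqrt M <= b - a.
Proof.
  intros HM Hub Hq.
  destruct (Rle_lt_dec (PI / sqrt M) (b - a)) as [H|H]; auto. exfalso.
  set (k := sqrt M).
  assert (Hk : 0 < k) by (apply sqrt_lt_R0; lra).
  assert (Hkk : k * k = M) by (apply sqrt_sqrt; lra).
  assert (Hkb : k * (b - a) < PI).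
  { fold k in H. apply (Rmult_lt_compat_l k) in H; auto.
    replace (k * (PI / k)) with PI in H by (field; lra). lra. }
  destruct (wronskian_mvt k b ltac:(lra)) as [c [Hc HW]]. unfold W in HW.
  rewrite Hua, Hub, Rminus_diag, Rmult_0_r, sin_0 in HW.
  assert (Hsc : 0 < sin (k * (c - a))) by (apply sin_gt_0; nra).
  assert (Hsb : 0 < sin (k * (b - a))) by (apply sin_gt_0; nra).
  assert (Hqc := Hq c Hc). assert (Huc := Hpos c Hc).
  assert (0 < (k * k - q c) * u c * sin (k * (c - a)) * (b - a)).
  { repeat apply Rmult_lt_0_compat; lra. }
  assert (Hu1b : 0 < u1 b).
  { destruct (Rlt_le_dec 0 (u1 b)); auto. nra. }
  destruct (root_left_of_pos_derive u a b (u1 b) Hab (Hu b ltac:(lra)) Hu1b Hub) as [x [Hx Hux]].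
  specialize (Hpos x Hx). lra.
Qed.

Lemma sturm_gap_le m : 0 < m -> (forall x, a < x < b -> m <= q x) -> b - a <= PI / sqrt m.
Proof.
  intros Hm Hq.
  destruct (Rle_lt_dec (b - a) (PI / sqrt m)) as [H|H]; auto. exfalso.
  set (k := sqrt m).
  assert (Hk : 0 < k) by (apply sqrt_lt_R0; lra).
  assert (Hkk : k * k = m) by (apply sqrt_sqrt; lra).
  assert (HPk : 0 < PI / k) by (apply Rdiv_lt_0_compat; auto; apply PI_RGT_0).
  set (b' := a + PI / k).
  assert (Hb' : a < b' < b) by (unfold b'; fold k in H; lra).
  assert (Hkb : k * (b' - a) = PI) by (unfold b'; field; lra).
  destruct (wronskian_mvt k b' ltac:(lra)) as [c [Hc HW]]. unfold W in HW.
  rewrite Hua, Hkb, Rminus_diag, Rmult_0_r, sin_0, sin_PI, cos_PI in HW.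
  assert (Hsc : 0 < sin (k * (c - a))) by (apply sin_gt_0; nra).
  assert (Hqc := Hq c ltac:(lra)). assert (Huc := Hpos c ltac:(lra)).
  assert (Hub' := Hpos b' ltac:(lra)).
  assert ((k * k - q c) * u c * sin (k * (c - a)) * (b' - a) <= 0).
  { assert (0 <= u c * sin (k * (c - a)) * (b' - a)) by (repeat apply Rmult_le_pos; lra).
    nra. }
  nra.
Qed.
End SturmComparison.

(** * Zeros of oscillatory solutions *)

Lemma continuous_no_root_pos (f : R -> R) (a b : R) :
  (forall x, a < x < b -> continuity_pt f x) -> (forall x, a < x < b -> f x <> 0) ->
  forall x y, a < x < b -> a < y < b -> 0 < f x -> 0 < f y.
Proof.
  intros Hc Hz x y Hx Hy Hfx.
  destruct (Rlt_le_dec 0 (f y)) as [H|H]; auto. exfalso.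
  destruct H as [H|H]; [| apply (Hz y); auto].
  destruct (Rlt_le_dec x y) as [Hxy|Hxy].
  - destruct (IVT_interv (fun t => - f t) x y) as [z [Hz1 Hz2]]; try lra.
    + intros t Ht. apply continuity_pt_opp, Hc. lra.
    + apply (Hz z); lra.
  - destruct Hxy as [Hxy|Hxy]; [|subst; lra].
    destruct (IVT_interv f y x) as [z [Hz1 Hz2]]; try lra.
    + intros t Ht. apply Hc. lra.
    + apply (Hz z); lra.
Qed.

Lemma continuous_no_root_sign (f : R -> R) (a b : R) : a < b ->
  (forall x, a < x < b -> continuity_pt f x) -> (forall x, a < x < b -> f x <> 0) ->
  exists e, (e = 1 \/ e = -1) /\ forall x, a < x < b -> 0 < e * f x.
Proof.
  intros Hab Hc Hz. set (m := (a + b) / 2). assert (Hm : a < m < b) by (unfold m; lra).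
  destruct (Rlt_le_dec 0 (f m)) as [Hp|Hn].
  - exists 1. split; auto. intros x Hx. rewrite Rmult_1_l.
    apply (continuous_no_root_pos f a b Hc Hz m); auto.
  - exists (-1). split; auto. intros x Hx.
    assert (Hn' : 0 < - f m) by (destruct Hn as [Hn|Hn]; [lra | exfalso; apply (Hz m); auto]).
    replace (-1 * f x) with (- f x) by ring.
    apply (continuous_no_root_pos (fun t => - f t) a b) with m; auto.
    + intros t Ht. apply continuity_pt_opp, Hc; auto.
    + intros t Ht Ht'. apply (Hz t Ht). lra.
Qed.

Lemma PI_mul_sub_le e : 0 <= e <= 1 / 2 -> PI * (1 - e) <= PI / sqrt (1 + e).
Proof.
  intros He. assert (HP := PI_RGT_0).
  assert (Hs : sqrt (1 + e) <= 1 + e / 2).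
  { rewrite <- (sqrt_square (1 + e / 2)) by lra. apply sqrt_le_1_alt. nra. }
  assert (Hs0 : 0 < sqrt (1 + e)) by (apply sqrt_lt_R0; lra).
  apply (Rmult_le_reg_r (sqrt (1 + e))); auto.
  replace (PI / sqrt (1 + e) * sqrt (1 + e)) with PI by (field; lra).
  assert ((1 - e) * sqrt (1 + e) <= (1 - e) * (1 + e / 2)) by (apply Rmult_le_compat_l; lra).
  nra.
Qed.

Lemma PI_div_sqrt_le e : 0 <= e <= 1 / 2 -> PI / sqrt (1 - e) <= PI * (1 + 2 * e).
Proof.
  intros He. assert (HP := PI_RGT_0).
  assert (Hs : / (1 + 2 * e) <= sqrt (1 - e)).
  { rewrite <- (sqrt_square (/ (1 + 2 * e))) by (left; apply Rinv_0_lt_compat; lra).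
    apply sqrt_le_1_alt. rewrite <- Rinv_mult.
    apply (Rmult_le_reg_r ((1 + 2 * e) * (1 + 2 * e))); [nra|].
    rewrite Rinv_l by nra. nra. }
  assert (Hs0 : 0 < / (1 + 2 * e)) by (apply Rinv_0_lt_compat; lra).
  unfold Rdiv. apply Rmult_le_compat_l; [lra|].
  rewrite <- (Rinv_inv (1 + 2 * e)). apply Rinv_le_contravar; auto.
Qed.

Lemma finite_Rabs_bound (f : nat -> R) (K : nat) :
  exists B, forall n, (n <= K)%nat -> Rabs (f n) <= B.
Proof.
  induction K as [|K [B IH]].
  - exists (Rabs (f 0%nat)). intros n Hn. replace n with 0%nat by lia. lra.
  - exists (Rmax B (Rabs (f (S K)))). intros n Hn.
    destruct (Nat.eq_dec n (S K)) as [->|Hne]; [apply Rmax_r|].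
    apply (Rle_trans _ B); [apply IH; lia | apply Rmax_l].
Qed.

Lemma bounded_of_telescoping (e : nat -> R) (K : nat) (D : R) : (1 <= K)%nat -> 0 <= D ->
  (forall k, (K <= k)%nat -> Rabs (e (S k) - e k) <= D * (/ INR k - / INR (S k))) ->
  exists B, forall n, Rabs (e n) <= B.
Proof.
  intros HK HD Hstep.
  assert (HKpos : 0 < INR K) by (apply lt_0_INR; lia).
  assert (Htel : forall t, Rabs (e (K + t)%nat - e K) <= D * (/ INR K - / INR (K + t))).
  { induction t.
    - rewrite Nat.add_0_r, !Rminus_diag, Rabs_R0. lra.
    - replace (K + S t)%nat with (S (K + t)) by lia.
      assert (H := Hstep (K + t)%nat ltac:(lia)).
      replace (e (S (K + t)) - e K) with ((e (S (K + t)) - e (K + t)%nat) + (e (K + t)%nat - e K))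
        by ring.
      eapply Rle_trans; [apply Rabs_triang|]. lra. }
  assert (Hinv : forall t, / INR K - / INR (K + t) <= 1).
  { intros t. assert (0 < / INR (K + t)) by (apply Rinv_0_lt_compat, lt_0_INR; lia).
    assert (/ INR K <= 1)
      by (rewrite <- Rinv_1; apply Rinv_le_contravar; [lra | apply (le_INR 1); auto]).
    lra. }
  destruct (finite_Rabs_bound e K) as [B0 HB0].
  exists (B0 + D). intros n.
  destruct (le_lt_dec n K) as [HnK|HnK].
  - assert (H := HB0 n HnK). assert (0 <= Rabs (e n)) by apply Rabs_pos. lra.
  - replace n with (K + (n - K))%nat by lia.
    assert (H := Htel (n - K)%nat). assert (H2 := HB0 K (le_n K)).
    assert (D * (/ INR K - / INR (K + (n - K))) <= D)
      by (rewrite <- (Rmult_1_r D) at 2; apply Rmult_le_compat_l; auto).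
    replace (e (K + (n - K))%nat) with ((e (K + (n - K))%nat - e K) + e K) by ring.
    eapply Rle_trans; [apply Rabs_triang|]. lra.
Qed.

Section OscillatoryZeros.
Variables (w w1 : R -> R) (gam : R) (j : nat -> R).
Let q x := 1 - gam / (x * x).
Hypothesis Hw : forall x, 0 < x -> is_derive w x (w1 x).
Hypothesis Hw1 : forall x, 0 < x -> is_derive w1 x (- q x * w x).
Hypothesis Hj : is_pos_zeros_enum w j.

Lemma zeros_pos n : (1 <= n)%nat -> 0 < j n.
Proof. intros Hn. apply (proj1 Hj n Hn). Qed.

Lemma zeros_le n m : (1 <= n)%nat -> (n <= m)%nat -> j n <= j m.
Proof.
  intros Hn Hm. induction Hm; [lra|]. assert (H := proj1 (proj2 Hj) m ltac:(lia)). lra.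
Qed.

Lemma zeros_lt_succ k : (1 <= k)%nat -> j k < j (S k).
Proof. apply (proj1 (proj2 Hj)). Qed.

Lemma no_zero_between k x : (1 <= k)%nat -> j k < x < j (S k) -> w x <> 0.
Proof.
  intros Hk Hx Hwx. destruct Hj as [Hj1 [_ Hj3]].
  destruct (Hj3 x) as [n [Hn Hjn]]; auto.
  - assert (H := zeros_pos k Hk). lra.
  - destruct (le_lt_dec n k) as [Hnk|Hnk].
    + assert (H := zeros_le n k Hn Hnk). lra.
    + assert (H := zeros_le (S k) n ltac:(lia) Hnk). lra.
Qed.

Lemma zero_interval_sign k : (1 <= k)%nat ->
  exists e, (e = 1 \/ e = -1) /\ forall x, j k < x < j (S k) -> 0 < e * w x.
Proof.
  intros Hk. assert (Hjk := zeros_pos k Hk). apply continuous_no_root_sign.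
  - apply zeros_lt_succ; auto.
  - intros x Hx. apply derivable_continuous_pt. exists (w1 x). apply is_derive_Reals, Hw. lra.
  - intros x Hx. apply (no_zero_between k); auto.
Qed.

Lemma positive_solution_between_zeros k : (1 <= k)%nat -> exists u u1 : R -> R,
  (forall x, j k <= x <= j (S k) -> is_derive u x (u1 x)) /\
  (forall x, j k <= x <= j (S k) -> is_derive u1 x (- q x * u x)) /\
  u (j k) = 0 /\ u (j (S k)) = 0 /\ (forall x, j k < x < j (S k) -> 0 < u x).
Proof.
  intros Hk. assert (Hjk := zeros_pos k Hk).
  destruct (zero_interval_sign k Hk) as [e [He Hpos]].
  exists (fun t => e * w t), (fun t => e * w1 t). split; [|split; [|split; [|split]]]; auto.
  - intros x Hx. apply is_derive_scal, Hw. lra.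
  - intros x Hx. replace (- q x * (e * w x)) with (e * (- q x * w x)) by ring.
    apply is_derive_scal, Hw1. lra.
  - rewrite (proj2 (proj1 Hj k Hk)). ring.
  - rewrite (proj2 (proj1 Hj (S k) ltac:(lia))). ring.
Qed.

Lemma zero_gap_ge k M : (1 <= k)%nat -> 0 < M ->
  (forall x, j k < x < j (S k) -> q x < M) -> PI / sqrt M <= j (S k) - j k.
Proof.
  intros Hk HM Hq.
  destruct (positive_solution_between_zeros k Hk) as (u & u1 & Hu & Hu1 & Hua & Hub & Hpos).
  apply (sturm_gap_ge u u1 q _ _ (zeros_lt_succ k Hk)); auto.
Qed.

Lemma zero_gap_le k m : (1 <= k)%nat -> 0 < m ->
  (forall x, j k < x < j (S k) -> m <= q x) -> j (S k) - j k <= PI / sqrt m.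
Proof.
  intros Hk Hm Hq.
  destruct (positive_solution_between_zeros k Hk) as (u & u1 & Hu & Hu1 & Hua & Hub & Hpos).
  apply (sturm_gap_le u u1 q); auto.
Qed.

Lemma potential_near_1 x y : 0 < y -> y <= x -> Rabs (q x - 1) < (Rabs gam + 1) / (y * y).
Proof.
  intros Hy Hx. unfold q.
  replace (1 - gam / (x * x) - 1) with (- (gam / (x * x))) by ring.
  rewrite Rabs_Ropp. unfold Rdiv.
  rewrite Rabs_mult, (Rabs_pos_eq (/ (x * x))) by (left; apply Rinv_0_lt_compat; nra).
  apply (Rle_lt_trans _ (Rabs gam * / (y * y))).
  - apply Rmult_le_compat_l; [apply Rabs_pos|]. apply Rinv_le_contravar; nra.
  - apply Rmult_lt_compat_r; [apply Rinv_0_lt_compat; nra | lra].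
Qed.

Lemma zero_gaps_ge_const : exists del, 0 < del /\ forall k, (1 <= k)%nat -> del <= j (S k) - j k.
Proof.
  assert (Hj1 := zeros_pos 1 (le_n 1)).
  set (M := 1 + (Rabs gam + 1) / (j 1%nat * j 1%nat)).
  assert (HM : 0 < M).
  { assert (0 < (Rabs gam + 1) / (j 1%nat * j 1%nat)).
    { apply Rdiv_lt_0_compat; [assert (H := Rabs_pos gam); lra | nra]. }
    unfold M; lra. }
  exists (PI / sqrt M). split.
  - apply Rdiv_lt_0_compat; [apply PI_RGT_0 | apply sqrt_lt_R0; auto].
  - intros k Hk. apply zero_gap_ge; auto. intros x Hx.
    assert (H := zeros_le 1 k (le_n 1) Hk).
    assert (H2 := potential_near_1 x (j 1%nat) Hj1 ltac:(lra)).
    apply Rabs_def2 in H2. unfold M. lra.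
Qed.

Lemma zeros_ge_linear : exists c, 0 < c /\ forall k, (1 <= k)%nat -> c * INR k <= j k.
Proof.
  destruct zero_gaps_ge_const as [del [Hdel Hgap]].
  assert (Hj1 := zeros_pos 1 (le_n 1)).
  set (c := Rmin (j 1%nat) del).
  assert (Hc1 : c <= j 1%nat) by apply Rmin_l. assert (Hc2 : c <= del) by apply Rmin_r.
  exists c. split; [apply Rmin_pos; auto|].
  intros k Hk. induction Hk as [|k Hk IH].
  - change (INR 1) with 1. lra.
  - rewrite S_INR. assert (H := Hgap k Hk). lra.
Qed.

Lemma zero_gap_near_PI k e : (1 <= k)%nat -> 0 < e <= 1 / 2 ->
  (forall x, j k < x < j (S k) -> Rabs (q x - 1) < e) -> Rabs (j (S k) - j k - PI) <= 2 * PI * e.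
Proof.
  intros Hk He Hq. assert (HP := PI_RGT_0).
  assert (Hlo : PI * (1 - e) <= j (S k) - j k).
  { apply (Rle_trans _ (PI / sqrt (1 + e))); [apply PI_mul_sub_le; lra|].
    apply zero_gap_ge; auto; [lra|]. intros x Hx. destruct (Rabs_def2 _ _ (Hq x Hx)). lra. }
  assert (Hhi : j (S k) - j k <= PI * (1 + 2 * e)).
  { apply (Rle_trans _ (PI / sqrt (1 - e))); [|apply PI_div_sqrt_le; lra].
    apply zero_gap_le; auto; [lra|]. intros x Hx. destruct (Rabs_def2 _ _ (Hq x Hx)). lra. }
  apply Rabs_le. split; lra.
Qed.

(* With [j k >= c k], the pinching [|q - 1| < G / (j k)^2] on [[j k, j (k+1)]] makes the
   error [O(1/k^2)], which is summable. *)
Lemma zero_gaps_near_PI : exists K D, (1 <= K)%nat /\ 0 <= D /\ forall k, (K <= k)%nat ->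
  Rabs ((j (S k) - PI * INR (S k)) - (j k - PI * INR k)) <= D * (/ INR k - / INR (S k)).
Proof.
  destruct zeros_ge_linear as [c [Hc Hck]].
  set (G := Rabs gam + 1). assert (HG : 0 < G) by (unfold G; assert (H := Rabs_pos gam); lra).
  set (D := G / (c * c)). assert (HD : 0 < D) by (apply Rdiv_lt_0_compat; nra).
  destruct (INR_unbounded (2 * D + 1)) as [K HK].
  assert (HK1 : (1 <= K)%nat) by (destruct K; [simpl in HK; lra | lia]).
  assert (HP := PI_RGT_0).
  exists K, (4 * PI * D). split; [auto|]. split; [nra|].
  intros k Hk. assert (Hk1 : (1 <= k)%nat) by lia.
  assert (Hkpos : 0 < INR k) by (apply lt_0_INR; lia).
  assert (HkK : INR K <= INR k) by (apply le_INR; auto).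
  assert (Hjk := Hck k Hk1). assert (Hjkp : 0 < j k) by nra.
  set (e := G / (j k * j k)).
  assert (He0 : 0 < e) by (apply Rdiv_lt_0_compat; nra).
  assert (HeD : e <= D * / (INR k * INR k)).
  { unfold e, D, Rdiv. rewrite Rmult_assoc, <- Rinv_mult. apply Rmult_le_compat_l; [lra|].
    apply Rinv_le_contravar; [apply Rmult_lt_0_compat; apply Rmult_lt_0_compat; lra|].
    replace (c * c * (INR k * INR k)) with ((c * INR k) * (c * INR k)) by ring.
    assert (0 <= c * INR k) by (apply Rmult_le_pos; lra).
    apply Rmult_le_compat; lra. }
  assert (He2 : D * / (INR k * INR k) <= 1 / 2).
  { apply (Rmult_le_reg_r (INR k * INR k)); [nra|].
    rewrite Rmult_assoc, Rinv_l by nra. nra. }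
  assert (Hgap := zero_gap_near_PI k e Hk1 ltac:(lra)
                    (fun x Hx => potential_near_1 x (j k) Hjkp ltac:(lra))).
  assert (Hinv : / (INR k * INR k) <= 2 * (/ INR k - / INR (S k))).
  { rewrite S_INR. replace (/ INR k - / (INR k + 1)) with (/ (INR k * (INR k + 1))) by (field; lra).
    apply (Rmult_le_reg_r (INR k * INR k * (INR k + 1))); [nra|].
    field_simplify; lra. }
  replace (j (S k) - PI * INR (S k) - (j k - PI * INR k)) with (j (S k) - j k - PI)
    by (rewrite S_INR; ring).
  apply (Rle_trans _ _ _ Hgap).
  assert (D * / (INR k * INR k) <= D * (2 * (/ INR k - / INR (S k))))
    by (apply Rmult_le_compat_l; lra).
  nra.
Qed.

Lemma zeros_near_PI_multiples : exists B, forall n, Rabs (j n - PI * INR n) <= B.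
Proof.
  destruct zero_gaps_near_PI as (K & D & HK & HD & Hstep).
  apply (bounded_of_telescoping (fun n => j n - PI * INR n) K D); auto.
Qed.
End OscillatoryZeros.

Lemma is_pos_zeros_enum_ext (f g : R -> R) (j : nat -> R) :
  (forall x, 0 < x -> (f x = 0 <-> g x = 0)) -> is_pos_zeros_enum f j -> is_pos_zeros_enum g j.
Proof.
  intros Hfg [Hj1 [Hj2 Hj3]]. split; [|split; auto].
  - intros n Hn. destruct (Hj1 n Hn) as [Hpos Hz]. split; auto. apply Hfg; auto.
  - intros x Hx Hz. apply Hj3; auto. apply Hfg; auto.
Qed.

Lemma Gamma_succ_neq0_of_zeros nu j : 0 <= nu -> is_pos_zeros_enum (BesselJ nu) j ->
  Gamma (nu + 1) <> 0.
Proof.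
  intros Hnu Hj HG.
  assert (H1 := zeros_pos _ _ Hj 1 (le_n 1)). assert (H2 := zeros_lt_succ _ _ Hj 1 (le_n 1)).
  apply (no_zero_between _ _ Hj 1 ((j 1%nat + j 2%nat) / 2) (le_n 1)); [lra|].
  apply BesselJ_Gamma_eq0; auto.
Qed.

Theorem BesselJ_zeros_asymptotics nu j : 0 <= nu -> is_pos_zeros_enum (BesselJ nu) j ->
  (exists del, 0 < del /\ forall k, (1 <= k)%nat -> del <= j (S k) - j k) /\
  (exists B, forall n, Rabs (j n - PI * INR n) <= B).
Proof.
  intros Hnu Hj. assert (HG := Gamma_succ_neq0_of_zeros nu j Hnu Hj).
  assert (Hw : is_pos_zeros_enum (bessel_normal nu) j).
  { apply (is_pos_zeros_enum_ext (BesselJ nu)); auto. intros; apply BesselJ_eq0_iff; auto. }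
  split.
  - apply (zero_gaps_ge_const (bessel_normal nu) (bessel_normal_derive nu) (nu * nu - 1 / 4)); auto.
    + intros; apply is_derive_bessel_normal; auto.
    + intros; apply is_derive_bessel_normal_derive; auto.
  - apply (zeros_near_PI_multiples (bessel_normal nu) (bessel_normal_derive nu) (nu * nu - 1 / 4)); auto.
    + intros; apply is_derive_bessel_normal; auto.
    + intros; apply is_derive_bessel_normal_derive; auto.
Qed.

(** * Merging two sequences by modulus *)

Lemma Cmod_minus_sym (a b : C) : Cmod (Cminus a b) = Cmod (Cminus b a).
Proof. rewrite <- Cmod_opp. f_equal. ring. Qed.

Lemma Cmod_sub_le_Cmod_minus (a b : C) : Cmod a - Cmod b <= Cmod (Cminus a b).
Proof.
  assert (H := Cmod_triangle (Cminus a b) b).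
  replace (Cplus (Cminus a b) b) with a in H by ring. lra.
Qed.

Lemma nat_step_crossing (f : nat -> nat) : (forall n, f (S n) = f n \/ f (S n) = S (f n)) ->
  forall N i, (f 0%nat <= i < f N)%nat -> exists n, f n = i /\ f (S n) = S i.
Proof.
  intros Hf N. induction N as [|N IH]; intros i Hi; [lia|].
  destruct (le_lt_dec (f N) i) as [H|H].
  - exists N. destruct (Hf N) as [E|E]; lia.
  - apply IH. lia.
Qed.

Lemma sqrt_estimate_index_bound (Z : nat -> C) (kappa B c : R) : 0 < kappa ->
  (forall i, (1 <= i)%nat -> Rabs (sqrt (Cmod (Z i)) - kappa * INR i) <= B) ->
  exists K, forall i, (1 <= i)%nat -> Cmod (Z i) <= c -> (i < K)%nat.
Proof.
  intros Hk HZ. destruct (INR_unbounded ((sqrt c + B) / kappa)) as [K HK].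
  exists K. intros i Hi Hc.
  destruct (le_lt_dec K i) as [H|H]; auto. exfalso.
  assert (HKi : INR K <= INR i) by (apply le_INR; auto).
  assert (HZi := HZ i Hi). apply Rabs_le_between' in HZi.
  assert (sqrt (Cmod (Z i)) <= sqrt c) by (apply sqrt_le_1_alt; auto).
  apply (Rmult_lt_compat_l kappa) in HK; auto.
  replace (kappa * ((sqrt c + B) / kappa)) with (sqrt c + B) in HK by (field; lra).
  nra.
Qed.

Lemma sqrt_estimate_bracket (Z : nat -> C) (kappa B mu : R) (i : nat) :
  (forall i, (1 <= i)%nat -> Rabs (sqrt (Cmod (Z i)) - kappa * INR i) <= B) ->
  (1 <= i)%nat -> ((1 < i)%nat -> Cmod (Z (pred i)) <= mu) -> 0 <= mu -> mu <= Cmod (Z i) ->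
  kappa * (INR i - 1) - B <= sqrt mu <= kappa * INR i + B.
Proof.
  intros HZ Hi Hprev Hmu0 Hmu. split.
  - destruct (Nat.eq_dec i 1) as [->|Hne].
    + assert (0 <= B) by (eapply Rle_trans; [apply Rabs_pos | apply (HZ 1%nat (le_n 1))]).
      assert (Hs := sqrt_pos mu). change (INR 1) with 1. lra.
    + assert (H := HZ (pred i) ltac:(lia)). apply Rabs_le_between' in H.
      replace (INR (pred i)) with (INR i - 1) in H
        by (destruct i; [lia | simpl pred; rewrite S_INR; ring]).
      assert (sqrt (Cmod (Z (pred i))) <= sqrt mu) by (apply sqrt_le_1_alt, Hprev; lia). lra.
  - assert (H := HZ i Hi). apply Rabs_le_between' in H.
    assert (sqrt mu <= sqrt (Cmod (Z i))) by (apply sqrt_le_1_alt; auto). lra.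
Qed.

Lemma Cmod_seq_le (Z : nat -> C) i i' :
  (forall i, (1 <= i)%nat -> Cmod (Z i) <= Cmod (Z (S i))) ->
  (1 <= i)%nat -> (i <= i')%nat -> Cmod (Z i) <= Cmod (Z i').
Proof. intros HZ H1 H2. induction H2; [lra|]. assert (H := HZ m ltac:(lia)). lra. Qed.

Section SortedMerge.
Variables (X Y : nat -> C) (kappa B : R).
Hypothesis Hk : 0 < kappa.
Hypothesis HXm : forall i, (1 <= i)%nat -> Cmod (X i) <= Cmod (X (S i)).
Hypothesis HYm : forall i, (1 <= i)%nat -> Cmod (Y i) <= Cmod (Y (S i)).
Hypothesis HXe : forall i, (1 <= i)%nat -> Rabs (sqrt (Cmod (X i)) - kappa * INR i) <= B.
Hypothesis HYe : forall i, (1 <= i)%nat -> Rabs (sqrt (Cmod (Y i)) - kappa * INR i) <= B.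
Hypothesis HXi : forall i i', (1 <= i)%nat -> (1 <= i')%nat -> X i = X i' -> i = i'.
Hypothesis HYi : forall i i', (1 <= i)%nat -> (1 <= i')%nat -> Y i = Y i' -> i = i'.
Hypothesis HXY : forall i k, (1 <= i)%nat -> (1 <= k)%nat -> X i <> Y k.

(* [merge_state n] holds the indices of the next unused terms of [X] and [Y]. *)
Fixpoint merge_state (n : nat) : nat * nat :=
  match n with
  | 0%nat => (1%nat, 1%nat)
  | S n => let (i, k) := merge_state n in
           if Rle_dec (Cmod (X i)) (Cmod (Y k)) then (S i, k) else (i, S k)
  end.

Definition merge_head (n : nat) : C :=
  let (i, k) := merge_state n in if Rle_dec (Cmod (X i)) (Cmod (Y k)) then X i else Y k.

Lemma merge_state_step n i k : merge_state n = (i, k) ->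
  (Cmod (X i) <= Cmod (Y k) /\ merge_state (S n) = (S i, k) /\ merge_head n = X i) \/
  (Cmod (Y k) < Cmod (X i) /\ merge_state (S n) = (i, S k) /\ merge_head n = Y k).
Proof.
  intros Hs. simpl. unfold merge_head. rewrite Hs.
  destruct (Rle_dec (Cmod (X i)) (Cmod (Y k))) as [H|H]; [left | right]; auto.
  split; auto. lra.
Qed.

Lemma merge_state_inv n : let (i, k) := merge_state n in
  (1 <= i)%nat /\ (1 <= k)%nat /\ (i + k = n + 2)%nat /\
  ((1 < i)%nat -> Cmod (X (pred i)) <= Cmod (Y k)) /\
  ((1 < k)%nat -> Cmod (Y (pred k)) <= Cmod (X i)).
Proof.
  induction n as [|n IH]; [simpl; lia|].
  destruct (merge_state n) as [i k] eqn:Hs. destruct IH as (Hi & Hk' & Hsum & I1 & I2).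
  destruct (merge_state_step n i k Hs) as [(Hle & Hst & _)|(Hlt & Hst & _)]; rewrite Hst.
  - repeat split; try lia; intros H; simpl; auto.
    assert (H1 := I2 H). assert (H2 := HXm i Hi). lra.
  - repeat split; try lia; intros H; simpl; [|lra].
    assert (H1 := I1 H). assert (H2 := HYm k Hk'). lra.
Qed.

Lemma Cmod_merge_head n : let (i, k) := merge_state n in
  Cmod (merge_head n) = Rmin (Cmod (X i)) (Cmod (Y k)).
Proof.
  destruct (merge_state n) as [i k] eqn:Hs.
  destruct (merge_state_step n i k Hs) as [(H & _ & ->)|(H & _ & ->)].
  - rewrite Rmin_left; auto.
  - rewrite Rmin_right; lra.
Qed.

Lemma merge_head_mono n : Cmod (merge_head n) <= Cmod (merge_head (S n)).
Proof.
  assert (H1 := Cmod_merge_head n). assert (H2 := Cmod_merge_head (S n)).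
  assert (I := merge_state_inv n).
  destruct (merge_state n) as [i k] eqn:Hs. destruct I as (Hi & Hk' & _).
  destruct (merge_state_step n i k Hs) as [(Hle & Hst & _)|(Hlt & Hst & _)];
    rewrite Hst in H2; rewrite H1, H2.
  - assert (H := HXm i Hi). apply Rmin_glb; [|apply Rmin_r].
    apply (Rle_trans _ (Cmod (X i))); [apply Rmin_l | lra].
  - assert (H := HYm k Hk'). apply Rmin_glb; [apply Rmin_l|].
    apply (Rle_trans _ (Cmod (Y k))); [apply Rmin_r | lra].
Qed.

(* With [merge_state n = (i, k)] and [i + k = n + 2], the [n]-th head lies between
   [X (i - 1)] and [X i], and between [Y (k - 1)] and [Y k], in modulus. *)
Lemma merge_head_sqrt_estimate n :
  Rabs (2 / kappa * sqrt (Cmod (merge_head n)) - INR (S n)) <= 1 + 2 * B / kappa.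
Proof.
  assert (H1 := Cmod_merge_head n). assert (I := merge_state_inv n).
  destruct (merge_state n) as [i k] eqn:Hs. destruct I as (Hi & Hk' & Hsum & I1 & I2).
  set (mu := Cmod (merge_head n)).
  assert (Hmu0 : 0 <= mu) by apply Cmod_ge_0.
  assert (HX : kappa * (INR i - 1) - B <= sqrt mu <= kappa * INR i + B).
  { apply (sqrt_estimate_bracket X); auto.
    - intros H. unfold mu. rewrite H1. apply Rmin_glb; auto.
      apply (Cmod_seq_le X (pred i) i); auto; lia.
    - unfold mu. rewrite H1. apply Rmin_l. }
  assert (HY : kappa * (INR k - 1) - B <= sqrt mu <= kappa * INR k + B).
  { apply (sqrt_estimate_bracket Y); auto.
    - intros H. unfold mu. rewrite H1. apply Rmin_glb; auto.
      assert (H' := HYm (pred k) ltac:(lia)). rewrite Nat.succ_pred_pos in H' by lia. exact H'.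
    - unfold mu. rewrite H1. apply Rmin_r. }
  assert (Hs2 : INR i + INR k = INR n + 2).
  { rewrite <- plus_INR, Hsum, plus_INR. simpl. ring. }
  rewrite S_INR.
  replace (2 / kappa * sqrt mu - (INR n + 1)) with ((2 * sqrt mu - kappa * (INR n + 1)) / kappa)
    by (field; lra).
  unfold Rdiv. rewrite Rabs_mult, (Rabs_pos_eq (/ kappa)) by (left; apply Rinv_0_lt_compat; auto).
  apply (Rmult_le_reg_r kappa); auto. rewrite Rmult_assoc, Rinv_l, Rmult_1_r by lra.
  replace ((1 + 2 * B * / kappa) * kappa) with (kappa + 2 * B) by (field; lra).
  apply Rabs_le. split; nra.
Qed.

Lemma merge_state_succ n :
  (fst (merge_state (S n)) = S (fst (merge_state n)) /\ snd (merge_state (S n)) = snd (merge_state n)) \/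
  (fst (merge_state (S n)) = fst (merge_state n) /\ snd (merge_state (S n)) = S (snd (merge_state n))).
Proof.
  destruct (merge_state n) as [i k] eqn:Hs.
  destruct (merge_state_step n i k Hs) as [(_ & -> & _)|(_ & -> & _)]; simpl; auto.
Qed.

Lemma merge_state_le n m : (n <= m)%nat ->
  (fst (merge_state n) <= fst (merge_state m))%nat /\ (snd (merge_state n) <= snd (merge_state m))%nat.
Proof. intros H. induction H; [lia|]. destruct (merge_state_succ m); lia. Qed.

Lemma merge_head_neq n m : (n < m)%nat -> merge_head n <> merge_head m.
Proof.
  intros Hlt Heq. assert (In := merge_state_inv n). assert (Im := merge_state_inv m).
  assert (Hle := merge_state_le (S n) m Hlt).
  destruct (merge_state n) as [i k] eqn:Hn. destruct (merge_state m) as [i' k'] eqn:Hm.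
  destruct In as (Hi & Hk1 & _). destruct Im as (Hi' & Hk1' & _).
  destruct (merge_state_step n i k Hn) as [(_ & Hst & Hp)|(_ & Hst & Hp)];
  destruct (merge_state_step m i' k' Hm) as [(_ & _ & Hp')|(_ & _ & Hp')];
  rewrite Hst in Hle; simpl in Hle; rewrite Hp, Hp' in Heq.
  - assert (i = i') by (apply HXi; auto). lia.
  - apply (HXY i k'); auto.
  - apply (HXY i' k); auto.
  - assert (k = k') by (apply HYi; auto). lia.
Qed.

Lemma merge_head_inj n m : merge_head n = merge_head m -> n = m.
Proof.
  intros Heq. destruct (Nat.lt_total n m) as [H|[H|H]]; auto; exfalso.
  - apply (merge_head_neq n m); auto.
  - apply (merge_head_neq m n); auto.
Qed.

Lemma merge_head_in n :
  (exists i, (1 <= i)%nat /\ merge_head n = X i) \/ (exists k, (1 <= k)%nat /\ merge_head n = Y k).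
Proof.
  assert (I := merge_state_inv n). destruct (merge_state n) as [i k] eqn:Hs.
  destruct I as (Hi & Hk1 & _).
  destruct (merge_state_step n i k Hs) as [(_ & _ & Hp)|(_ & _ & Hp)];
    [left; exists i | right; exists k]; auto.
Qed.

Lemma merge_fst_unbounded i : (1 <= i)%nat -> exists N, (i < fst (merge_state N))%nat.
Proof.
  intros Hi. destruct (sqrt_estimate_index_bound Y kappa B (Cmod (X i)) Hk HYe) as [K HK].
  exists (i + K)%nat. assert (I := merge_state_inv (i + K)).
  destruct (merge_state (i + K)) as [i' k'] eqn:Hs. simpl.
  destruct I as (Hi' & Hk' & Hsum & _ & I2).
  destruct (le_lt_dec i' i) as [H|H]; auto. exfalso.
  assert (Hpk := HK (pred k') ltac:(lia)).
  assert (Hle : Cmod (Y (pred k')) <= Cmod (X i))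
    by (eapply Rle_trans; [apply I2; lia | apply Cmod_seq_le; auto]).
  specialize (Hpk Hle). lia.
Qed.

Lemma merge_snd_unbounded k : (1 <= k)%nat -> exists N, (k < snd (merge_state N))%nat.
Proof.
  intros Hk1. destruct (sqrt_estimate_index_bound X kappa B (Cmod (Y k)) Hk HXe) as [K HK].
  exists (k + K)%nat. assert (I := merge_state_inv (k + K)).
  destruct (merge_state (k + K)) as [i' k'] eqn:Hs. simpl.
  destruct I as (Hi' & Hk' & Hsum & I1 & _).
  destruct (le_lt_dec k' k) as [H|H]; auto. exfalso.
  assert (Hpi := HK (pred i') ltac:(lia)).
  assert (Hle : Cmod (X (pred i')) <= Cmod (Y k))
    by (eapply Rle_trans; [apply I1; lia | apply Cmod_seq_le; auto]).
  specialize (Hpi Hle). lia.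
Qed.

Lemma merge_hits_X i : (1 <= i)%nat -> exists n, merge_head n = X i.
Proof.
  intros Hi. destruct (merge_fst_unbounded i Hi) as [N HN].
  destruct (nat_step_crossing (fun n => fst (merge_state n))) with (N := N) (i := i)
    as [n [H1 H2]]; [intros; destruct (merge_state_succ n); lia | simpl; lia |].
  exists n. destruct (merge_state n) as [a c] eqn:Hs. simpl in H1. subst a.
  destruct (merge_state_step n i c Hs) as [(_ & Hst & Hp)|(_ & Hst & Hp)];
    rewrite Hst in H2; simpl in H2; auto; lia.
Qed.

Lemma merge_hits_Y k : (1 <= k)%nat -> exists n, merge_head n = Y k.
Proof.
  intros Hk1. destruct (merge_snd_unbounded k Hk1) as [N HN].
  destruct (nat_step_crossing (fun n => snd (merge_state n))) with (N := N) (i := k)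
    as [n [H1 H2]]; [intros; destruct (merge_state_succ n); lia | simpl; lia |].
  exists n. destruct (merge_state n) as [a c] eqn:Hs. simpl in H1. subst c.
  destruct (merge_state_step n a k Hs) as [(_ & Hst & Hp)|(_ & Hst & Hp)];
    rewrite Hst in H2; simpl in H2; auto; lia.
Qed.
End SortedMerge.

Theorem sorted_merge (X Y : nat -> C) (kappa B : R) : 0 < kappa ->
  (forall i, (1 <= i)%nat -> Cmod (X i) <= Cmod (X (S i))) ->
  (forall i, (1 <= i)%nat -> Cmod (Y i) <= Cmod (Y (S i))) ->
  (forall i, (1 <= i)%nat -> Rabs (sqrt (Cmod (X i)) - kappa * INR i) <= B) ->
  (forall i, (1 <= i)%nat -> Rabs (sqrt (Cmod (Y i)) - kappa * INR i) <= B) ->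
  (forall i i', (1 <= i)%nat -> (1 <= i')%nat -> X i = X i' -> i = i') ->
  (forall i i', (1 <= i)%nat -> (1 <= i')%nat -> Y i = Y i' -> i = i') ->
  (forall i k, (1 <= i)%nat -> (1 <= k)%nat -> X i <> Y k) ->
  exists Lam : nat -> C,
    (forall z, (exists n, (1 <= n)%nat /\ Lam n = z) <->
       (exists n, (1 <= n)%nat /\ (z = X n \/ z = Y n))) /\
    (forall n m, (1 <= n)%nat -> (1 <= m)%nat -> Lam n = Lam m -> n = m) /\
    (forall n, (1 <= n)%nat -> Cmod (Lam n) <= Cmod (Lam (S n))) /\
    (forall n, (1 <= n)%nat -> Rabs (2 / kappa * sqrt (Cmod (Lam n)) - INR n) <= 1 + 2 * B / kappa).
Proof.
  intros Hk HXm HYm HXe HYe HXi HYi HXY.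
  exists (fun n => merge_head X Y (pred n)). split; [|split; [|split]].
  - intros z. split.
    + intros [n [Hn <-]].
      destruct (merge_head_in X Y HXm HYm (pred n)) as [[i [Hi ->]]|[k [Hk' ->]]];
        [exists i | exists k]; auto.
    + intros [n [Hn [-> | ->]]].
      * destruct (merge_hits_X X Y kappa B Hk HXm HYm HYe n Hn) as [m Hm].
        exists (S m). split; [lia | auto].
      * destruct (merge_hits_Y X Y kappa B Hk HXm HYm HXe n Hn) as [m Hm].
        exists (S m). split; [lia | auto].
  - intros n m Hn Hm Heq. apply (merge_head_inj X Y HXm HYm HXi HYi HXY) in Heq. lia.
  - intros n Hn. replace (pred (S n)) with (S (pred n)) by lia. apply merge_head_mono; auto.
  - intros n Hn. replace (INR n) with (INR (S (pred n))) by (f_equal; lia).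
    apply merge_head_sqrt_estimate; auto.
Qed.

(** * Sequences whose square-rooted moduli grow linearly *)

Section SqrtLinearSequence.
Variables (Lam : nat -> C) (p s0 : R).
Hypothesis Hp : 0 < p.
Hypothesis Hmono : forall n, (1 <= n)%nat -> Cmod (Lam n) <= Cmod (Lam (S n)).
Hypothesis Hest : forall n, (1 <= n)%nat -> Rabs (p * sqrt (Cmod (Lam n)) - INR n) <= s0.

Lemma Cmod_minus_ge_sq_diff (q : nat) n m : 4 * s0 + 1 < INR q -> (1 <= m)%nat -> (m + q <= n)%nat ->
  1 / (2 * p * p) * Rabs (INR n ^ 2 - INR m ^ 2) <= Cmod (Cminus (Lam n) (Lam m)).
Proof.
  intros Hq Hm Hn.
  assert (Hn' := Hest n ltac:(lia)). assert (Hm' := Hest m Hm).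
  apply Rabs_le_between' in Hn'. apply Rabs_le_between' in Hm'.
  assert (Hnm : INR m + INR q <= INR n) by (rewrite <- plus_INR; apply le_INR; lia).
  assert (Hm1 : 1 <= INR m) by (apply (le_INR 1); auto).
  set (a := sqrt (Cmod (Lam n))) in *. set (b := sqrt (Cmod (Lam m))) in *.
  assert (Ha : a * a = Cmod (Lam n)) by (apply sqrt_sqrt, Cmod_ge_0).
  assert (Hb : b * b = Cmod (Lam m)) by (apply sqrt_sqrt, Cmod_ge_0).
  assert (Hb0 : 0 <= b) by apply sqrt_pos.
  assert (Hsq : (INR n * INR n - INR m * INR m) / 2 <= (p * a) * (p * a) - (p * b) * (p * b)).
  { assert ((INR n - s0) * (INR n - s0) <= (p * a) * (p * a)) by (apply Rmult_le_compat; lra).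
    assert ((p * b) * (p * b) <= (INR m + s0) * (INR m + s0))
      by (apply Rmult_le_compat; try lra; apply Rmult_le_pos; lra).
    nra. }
  assert (Hdiff : (INR n * INR n - INR m * INR m) / (2 * p * p) <= Cmod (Lam n) - Cmod (Lam m)).
  { rewrite <- Ha, <- Hb.
    replace (a * a - b * b) with (((p * a) * (p * a) - (p * b) * (p * b)) / (p * p)) by (field; lra).
    replace ((INR n * INR n - INR m * INR m) / (2 * p * p))
      with ((INR n * INR n - INR m * INR m) / 2 / (p * p)) by (field; lra).
    unfold Rdiv at 1 3. apply Rmult_le_compat_r; [left; apply Rinv_0_lt_compat; nra | lra]. }
  assert (H := Cmod_sub_le_Cmod_minus (Lam n) (Lam m)).
  rewrite Rabs_pos_eq by (simpl; nra). simpl.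
  replace (1 / (2 * p * p) * (INR n * (INR n * 1) - INR m * (INR m * 1)))
    with ((INR n * INR n - INR m * INR m) / (2 * p * p)) by (field; lra).
  lra.
Qed.

Lemma Cmod_le_prefix r M : exists N, (N <= M)%nat /\ forall n, (1 <= n)%nat -> (n <= M)%nat ->
  (Cmod (Lam n) <= r <-> (n <= N)%nat).
Proof.
  induction M as [|M [N [HN IH]]].
  - exists 0%nat. split; auto. intros n H1 H2. lia.
  - destruct (Rle_dec (Cmod (Lam (S M))) r) as [Hr|Hr].
    + exists (S M). split; auto. intros n H1 H2. split; intros _; auto.
      assert (H := Cmod_seq_le Lam n (S M) Hmono H1 H2). lra.
    + exists N. split; auto. intros n H1 H2. destruct (Nat.eq_dec n (S M)) as [->|Hne].
      * split; intros H; [contradiction | lia].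
      * apply IH; lia.
Qed.

Lemma count_le_sqrt_estimate r : 0 < r ->
  exists N : nat, count_le Lam r N /\ Rabs (p * sqrt r - INR N) <= s0 + 1.
Proof.
  intros Hr. destruct (INR_unbounded (p * sqrt r + s0)) as [M HM].
  destruct (Cmod_le_prefix r M) as [N [HNM HN]].
  assert (Hiff : forall n, (1 <= n)%nat -> (Cmod (Lam n) <= r <-> (n <= N)%nat)).
  { intros n H1. destruct (le_lt_dec n M) as [H|H]; [apply HN; auto|].
    split; intros H2; [exfalso | lia].
    assert (H3 := Hest n H1). apply Rabs_le_between' in H3.
    assert (sqrt (Cmod (Lam n)) <= sqrt r) by (apply sqrt_le_1_alt; auto).
    assert (p * sqrt (Cmod (Lam n)) <= p * sqrt r) by (apply Rmult_le_compat_l; lra).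
    assert (INR M < INR n) by (apply lt_INR; auto). lra. }
  exists N. split.
  - exists (seq 1 N). split; [apply seq_NoDup|]. split; [apply length_seq|].
    intros n. rewrite in_seq. split.
    + intros [H1 H2]. split; [lia|]. apply Hiff; lia.
    + intros [H1 H2]. apply Hiff in H2; auto. lia.
  - assert (Hsr : 0 <= sqrt r) by apply sqrt_pos.
    assert (HN1 : ~ Cmod (Lam (S N)) <= r) by (rewrite Hiff; lia).
    assert (H1 : p * sqrt r <= INR (S N) + s0).
    { assert (sqrt r <= sqrt (Cmod (Lam (S N)))) by (apply sqrt_le_1_alt; lra).
      assert (H3 := Hest (S N) ltac:(lia)). apply Rabs_le_between' in H3.
      assert (p * sqrt r <= p * sqrt (Cmod (Lam (S N)))) by (apply Rmult_le_compat_l; lra). lra. }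
    rewrite S_INR in H1.
    destruct N as [|N'].
    + simpl. rewrite Rminus_0_r, Rabs_pos_eq by (apply Rmult_le_pos; lra). simpl in H1. lra.
    + assert (HN2 : Cmod (Lam (S N')) <= r) by (apply Hiff; lia).
      assert (H2 : INR (S N') - s0 <= p * sqrt r).
      { assert (sqrt (Cmod (Lam (S N'))) <= sqrt r) by (apply sqrt_le_1_alt; lra).
        assert (H3 := Hest (S N') ltac:(lia)). apply Rabs_le_between' in H3.
        assert (p * sqrt (Cmod (Lam (S N'))) <= p * sqrt r) by (apply Rmult_le_compat_l; lra). lra. }
      apply Rabs_le. split; lra.
Qed.
End SqrtLinearSequence.

Definition spectral_sequence_conditions (Lam : nat -> C) : Prop :=
  (forall n m, (1 <= n)%nat -> (1 <= m)%nat -> n <> m -> Lam n <> Lam m) /\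
  (forall n, (1 <= n)%nat -> 0 < Re (Lam n)) /\
  (exists delta, 0 < delta /\
     forall n, (1 <= n)%nat -> Rabs (Im (Lam n)) <= delta * sqrt (Re (Lam n))) /\
  (forall n, (1 <= n)%nat -> Cmod (Lam n) <= Cmod (Lam (S n))) /\
  (exists (rho : R) (q : nat), 0 < rho /\ (1 <= q)%nat /\
     (forall n m, (1 <= n)%nat -> (1 <= m)%nat -> (q <= Nat.max (n - m) (m - n))%nat ->
        Cmod (Cminus (Lam n) (Lam m)) >= rho * Rabs (INR n ^ 2 - INR m ^ 2)) /\
     (exists c, 0 < c /\
        forall n m, (1 <= n)%nat -> (1 <= m)%nat -> n <> m ->
          (Nat.max (n - m) (m - n) < q)%nat -> c <= Cmod (Cminus (Lam n) (Lam m)))) /\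
  (exists p s, 0 < p /\ 0 < s /\
     forall r, 0 < r -> exists N : nat, count_le Lam r N /\ Rabs (p * sqrt r - INR N) <= s).

Theorem spectral_sequence_conditions_intro (Lam : nat -> C) :
  (forall n m, (1 <= n)%nat -> (1 <= m)%nat -> Lam n = Lam m -> n = m) ->
  (exists r0, 0 < r0 /\ forall n, (1 <= n)%nat -> r0 <= Re (Lam n)) ->
  (exists sI, forall n, (1 <= n)%nat -> Rabs (Im (Lam n)) <= sI) ->
  (forall n, (1 <= n)%nat -> Cmod (Lam n) <= Cmod (Lam (S n))) ->
  (exists p s0, 0 < p /\ forall n, (1 <= n)%nat -> Rabs (p * sqrt (Cmod (Lam n)) - INR n) <= s0) ->
  (exists c, 0 < c /\ forall n m, (1 <= n)%nat -> (1 <= m)%nat -> n <> m ->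
     c <= Cmod (Cminus (Lam n) (Lam m))) ->
  spectral_sequence_conditions Lam.
Proof.
  intros Hinj [r0 [Hr0 Hre]] [sI HsI] Hmono [p [s0 [Hp Hest]]] [c [Hc Hsep]].
  assert (Hs0 : 0 <= s0) by (eapply Rle_trans; [apply Rabs_pos | apply (Hest 1%nat (le_n 1))]).
  split; [intros n m Hn Hm Hnm Heq; apply Hnm, Hinj; auto|].
  split; [intros n Hn; assert (H := Hre n Hn); lra|].
  split.
  { assert (HsI0 : 0 <= sI) by (eapply Rle_trans; [apply Rabs_pos | apply (HsI 1%nat (le_n 1))]).
    assert (Hsq : 0 < sqrt r0) by (apply sqrt_lt_R0; auto).
    exists ((sI + 1) / sqrt r0). split; [apply Rdiv_lt_0_compat; lra|].
    intros n Hn. assert (H1 := HsI n Hn).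
    assert (sqrt r0 <= sqrt (Re (Lam n))) by (apply sqrt_le_1_alt; auto).
    assert (Hd : (sI + 1) / sqrt r0 * sqrt r0 <= (sI + 1) / sqrt r0 * sqrt (Re (Lam n)))
      by (apply Rmult_le_compat_l; auto; left; apply Rdiv_lt_0_compat; lra).
    replace ((sI + 1) / sqrt r0 * sqrt r0) with (sI + 1) in Hd by (field; lra). lra. }
  split; [auto|]. split.
  { destruct (INR_unbounded (4 * s0 + 1)) as [q Hq].
    assert (Hq1 : (1 <= q)%nat) by (destruct q; [simpl in Hq; lra | lia]).
    exists (1 / (2 * p * p)), q. split; [apply Rdiv_lt_0_compat; nra|]. split; [auto|]. split.
    - intros n m Hn Hm Hmax. apply Rle_ge.
      destruct (le_lt_dec (m + q) n) as [H|H].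
      + apply (Cmod_minus_ge_sq_diff Lam p s0 Hp Hest q); auto.
      + rewrite Cmod_minus_sym, <- Rabs_Ropp.
        replace (- (INR n ^ 2 - INR m ^ 2)) with (INR m ^ 2 - INR n ^ 2) by ring.
        apply (Cmod_minus_ge_sq_diff Lam p s0 Hp Hest q); auto; lia.
    - exists c. split; [auto|]. intros n m Hn Hm Hnm _. apply Hsep; auto. }
  exists p, (s0 + 1). split; [auto|]. split; [lra|].
  intros r Hr. apply (count_le_sqrt_estimate Lam p s0); auto.
Qed.

(** * The shifted spectral family *)

Lemma finite_pos_lower_bound (g : nat -> R) : (forall k, (1 <= k)%nat -> 0 < g k) ->
  forall K, exists c, 0 < c /\ forall k, (1 <= k)%nat -> (k <= K)%nat -> c <= g k.
Proof.
  intros Hg K. induction K as [|K [c [Hc H]]].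
  - exists 1. split; [lra | intros; lia].
  - assert (Hg' := Hg (S K) ltac:(lia)).
    exists (Rmin c (g (S K))). split; [apply Rmin_pos; auto|].
    intros k H1 H2. destruct (Nat.eq_dec k (S K)) as [->|Hne]; [apply Rmin_r|].
    apply (Rle_trans _ c); [apply Rmin_l | apply H; lia].
Qed.

Lemma finite_pos_lower_bound2 (f : nat -> nat -> R) :
  (forall i k, (1 <= i)%nat -> (1 <= k)%nat -> 0 < f i k) ->
  forall K, exists c, 0 < c /\ forall i k, (1 <= i)%nat -> (1 <= k)%nat ->
    (i <= K)%nat -> (k <= K)%nat -> c <= f i k.
Proof.
  intros Hf K. induction K as [|K [c [Hc H]]].
  - exists 1. split; [lra | intros; lia].
  - destruct (finite_pos_lower_bound (fun k => f (S K) k) ltac:(intros; apply Hf; lia) (S K))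
      as [c1 [Hc1 H1]].
    destruct (finite_pos_lower_bound (fun i => f i (S K)) ltac:(intros; apply Hf; lia) (S K))
      as [c2 [Hc2 H2]].
    exists (Rmin c (Rmin c1 c2)). split; [repeat apply Rmin_pos; auto|].
    intros i k Hi Hk HiK HkK.
    assert (M1 := Rmin_l c (Rmin c1 c2)). assert (M2 := Rmin_r c (Rmin c1 c2)).
    assert (M3 := Rmin_l c1 c2). assert (M4 := Rmin_r c1 c2).
    destruct (Nat.eq_dec i (S K)) as [->|Hi'].
    + assert (H3 := H1 k Hk HkK). simpl in H3. lra.
    + destruct (Nat.eq_dec k (S K)) as [->|Hk'].
      * assert (H3 := H2 i Hi HiK). simpl in H3. lra.
      * assert (H3 := H i k Hi Hk ltac:(lia) ltac:(lia)). lra.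
Qed.

Lemma sqrt_plus_le a e : 0 <= a -> 0 <= e -> sqrt (a + e) <= sqrt a + sqrt e.
Proof.
  intros Ha He. assert (H1 := sqrt_pos a). assert (H2 := sqrt_pos e).
  rewrite <- (sqrt_square (sqrt a + sqrt e)) by lra. apply sqrt_le_1_alt.
  assert (E1 := sqrt_sqrt a Ha). assert (E2 := sqrt_sqrt e He). nra.
Qed.

Section ShiftedFamily.
Variables (lam : nat -> R) (g kappa B0 : R) (sigma : C).
Hypothesis Hg : 0 < g.
Hypothesis Hk : 0 < kappa.
Hypothesis Hlam1 : 0 < lam 1%nat.
Hypothesis Hgap : forall k, (1 <= k)%nat -> g * INR k <= lam (S k) - lam k.
Hypothesis Hest : forall n, (1 <= n)%nat -> Rabs (sqrt (lam n) - kappa * INR n) <= B0.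
Hypothesis Hsigma : 0 <= Re sigma.

Let Xs i := Cplus (RtoC (lam i)) sigma.
Let Ys i := RtoC (lam i).

Lemma lam_sub_ge i k : (1 <= i)%nat -> (i < k)%nat -> g * (INR k - 1) <= lam k - lam i.
Proof.
  intros Hi Hik. induction Hik as [|k Hik IH].
  - rewrite S_INR. replace (INR i + 1 - 1) with (INR i) by ring. apply Hgap; auto.
  - assert (H := Hgap k ltac:(lia)). assert (H1 : 1 <= INR k) by (apply (le_INR 1); lia).
    rewrite S_INR. nra.
Qed.

Lemma lam_ge_1 i : (1 <= i)%nat -> lam 1%nat <= lam i.
Proof.
  intros Hi. induction Hi as [|i Hi IH]; [lra|].
  assert (H := Hgap i Hi). assert (0 <= g * INR i) by (apply Rmult_le_pos; [lra | apply pos_INR]).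
  lra.
Qed.

Lemma lam_pos i : (1 <= i)%nat -> 0 < lam i.
Proof. intros Hi. assert (H := lam_ge_1 i Hi). lra. Qed.

Lemma Rabs_lam_sub_ge i k : (1 <= i)%nat -> (1 <= k)%nat -> i <> k ->
  g * (INR (Nat.max i k) - 1) <= Rabs (lam i - lam k) /\ g <= Rabs (lam i - lam k).
Proof.
  intros Hi Hk' Hne. destruct (Nat.lt_total i k) as [Hl|[He|Hl]]; [| contradiction |].
  - assert (H := lam_sub_ge i k Hi Hl). rewrite Nat.max_r by lia.
    assert (H2 : 2 <= INR k) by (apply (le_INR 2); lia).
    rewrite Rabs_minus_sym, Rabs_pos_eq by nra. split; nra.
  - assert (H := lam_sub_ge k i Hk' Hl). rewrite Nat.max_l by lia.
    assert (H2 : 2 <= INR i) by (apply (le_INR 2); lia).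
    rewrite Rabs_pos_eq by nra. split; nra.
Qed.

Lemma lam_inj i k : (1 <= i)%nat -> (1 <= k)%nat -> lam i = lam k -> i = k.
Proof.
  intros Hi Hk' H. destruct (Nat.eq_dec i k) as [|Hne]; auto.
  destruct (Rabs_lam_sub_ge i k Hi Hk' Hne) as [_ H2]. rewrite H, Rminus_diag, Rabs_R0 in H2. lra.
Qed.

Lemma Cmod_Ys_mono i : (1 <= i)%nat -> Cmod (Ys i) <= Cmod (Ys (S i)).
Proof.
  intros Hi. unfold Ys. rewrite !Cmod_R, !Rabs_pos_eq by (left; apply lam_pos; lia).
  assert (H := Hgap i Hi). assert (0 <= g * INR i) by (apply Rmult_le_pos; [lra | apply pos_INR]). lra.
Qed.

Lemma Cmod_Xs_mono i : (1 <= i)%nat -> Cmod (Xs i) <= Cmod (Xs (S i)).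
Proof.
  intros Hi. unfold Xs. destruct sigma as [u v]. unfold Cmod, RtoC, Cplus; simpl in *.
  apply sqrt_le_1_alt.
  assert (H := Hgap i Hi). assert (0 <= g * INR i) by (apply Rmult_le_pos; [lra | apply pos_INR]).
  assert (H1 := lam_ge_1 i Hi). nra.
Qed.

Lemma Ys_sqrt_estimate i : (1 <= i)%nat -> Rabs (sqrt (Cmod (Ys i)) - kappa * INR i) <= B0.
Proof.
  intros Hi. unfold Ys. rewrite Cmod_R, (Rabs_pos_eq (lam i)) by (left; apply lam_pos; auto). auto.
Qed.

Lemma Xs_sqrt_estimate i : (1 <= i)%nat ->
  Rabs (sqrt (Cmod (Xs i)) - kappa * INR i) <= B0 + sqrt (Cmod sigma).
Proof.
  intros Hi. assert (H1 := lam_ge_1 i Hi).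
  assert (L1 : lam i <= Cmod (Xs i)).
  { apply (Rle_trans _ (Re (Xs i))); [|apply (Rle_trans _ _ _ (Rle_abs _)), re_le_Cmod].
    unfold Xs. destruct sigma as [u v]. simpl in *. lra. }
  assert (L2 : Cmod (Xs i) <= lam i + Cmod sigma).
  { eapply Rle_trans; [apply Cmod_triangle|]. rewrite Cmod_R, Rabs_pos_eq by lra. lra. }
  assert (S1 : sqrt (lam i) <= sqrt (Cmod (Xs i))) by (apply sqrt_le_1_alt; auto).
  assert (S2 : sqrt (Cmod (Xs i)) <= sqrt (lam i) + sqrt (Cmod sigma)).
  { eapply Rle_trans; [apply sqrt_le_1_alt, L2 | apply sqrt_plus_le; [lra | apply Cmod_ge_0]]. }
  assert (E := Hest i Hi). apply Rabs_le_between' in E.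
  assert (0 <= sqrt (Cmod sigma)) by apply sqrt_pos.
  apply Rabs_le. split; lra.
Qed.

Lemma Cmod_Ys_sub_ge i k : (1 <= i)%nat -> (1 <= k)%nat -> i <> k ->
  g <= Cmod (Cminus (Ys i) (Ys k)).
Proof.
  intros Hi Hk' Hne. unfold Ys. rewrite <- RtoC_minus, Cmod_R. apply Rabs_lam_sub_ge; auto.
Qed.

Lemma Cmod_Xs_sub_ge i k : (1 <= i)%nat -> (1 <= k)%nat -> i <> k ->
  g <= Cmod (Cminus (Xs i) (Xs k)).
Proof.
  intros Hi Hk' Hne. replace (Cminus (Xs i) (Xs k)) with (Cminus (Ys i) (Ys k)) by (unfold Xs, Ys; ring).
  apply Cmod_Ys_sub_ge; auto.
Qed.

(* Far from the diagonal [|lam i - lam k|] outgrows [2 |sigma|]; the finitely many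
   remaining pairs are handled by a minimum. *)
Lemma Cmod_Xs_Ys_sub_ge : (forall i k, (1 <= i)%nat -> (1 <= k)%nat -> Xs i <> Ys k) ->
  exists c, 0 < c /\ forall i k, (1 <= i)%nat -> (1 <= k)%nat -> c <= Cmod (Cminus (Xs i) (Ys k)).
Proof.
  intros Hdisj.
  assert (Hdiff : forall i k, Cminus (Xs i) (Ys k) = Cplus (RtoC (lam i - lam k)) sigma)
    by (intros; unfold Xs, Ys; rewrite RtoC_minus; ring).
  set (w0 := Cmod sigma).
  assert (Hw0 : 0 < w0).
  { destruct (Cmod_ge_0 sigma) as [H|H]; auto. exfalso.
    apply (Hdisj 1%nat 1%nat); auto. unfold Xs, Ys. rewrite (Cmod_eq_0 sigma) by auto. ring. }
  destruct (INR_unbounded (2 * w0 / g + 1)) as [K HK].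
  destruct (finite_pos_lower_bound2 (fun i k => Cmod (Cminus (Xs i) (Ys k)))) with (K := K)
    as [c1 [Hc1 H1]].
  { intros i k Hi Hk'. destruct (Cmod_ge_0 (Cminus (Xs i) (Ys k))) as [H|H]; auto. exfalso.
    apply (Hdisj i k Hi Hk'), Ceq_minus, Cmod_eq_0. auto. }
  exists (Rmin c1 w0). split; [apply Rmin_pos; auto|].
  intros i k Hi Hk'.
  assert (M1 := Rmin_l c1 w0). assert (M2 := Rmin_r c1 w0).
  destruct (Nat.eq_dec i k) as [->|Hne].
  - rewrite Hdiff, Rminus_diag. replace (Cplus (RtoC 0) sigma) with sigma by ring. fold w0. lra.
  - destruct (le_lt_dec (Nat.max i k) K) as [HM|HM].
    + assert (H := H1 i k Hi Hk' ltac:(lia) ltac:(lia)). simpl in H. lra.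
    + destruct (Rabs_lam_sub_ge i k Hi Hk' Hne) as [Hf _].
      assert (HKM : INR K <= INR (Nat.max i k) - 1).
      { replace (INR (Nat.max i k) - 1) with (INR (Nat.max i k - 1))
          by (rewrite minus_INR by lia; simpl; ring).
        apply le_INR; lia. }
      assert (H2 : 2 * w0 <= g * (INR (Nat.max i k) - 1)).
      { apply (Rmult_le_reg_r (/ g)); [apply Rinv_0_lt_compat; auto|].
        replace (g * (INR (Nat.max i k) - 1) * / g) with (INR (Nat.max i k) - 1) by (field; lra).
        unfold Rdiv in HK. lra. }
      rewrite Hdiff.
      assert (H3 := Cmod_triangle (Cplus (RtoC (lam i - lam k)) sigma) (Copp sigma)).
      replace (Cplus (Cplus (RtoC (lam i - lam k)) sigma) (Copp sigma)) with (RtoC (lam i - lam k))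
        in H3 by ring.
      rewrite Cmod_opp, Cmod_R in H3. fold w0 in H3. lra.
Qed.

Let in_family z := exists i, (1 <= i)%nat /\ (z = Xs i \/ z = Ys i).

Lemma shifted_family_separated : (forall i k, (1 <= i)%nat -> (1 <= k)%nat -> Xs i <> Ys k) ->
  exists c, 0 < c /\ forall z w, in_family z -> in_family w -> z <> w -> c <= Cmod (Cminus z w).
Proof.
  intros Hdisj. destruct (Cmod_Xs_Ys_sub_ge Hdisj) as [c [Hc H]].
  exists (Rmin g c). split; [apply Rmin_pos; auto|].
  intros z w [i [Hi Hz]] [k [Hk' Hw]] Hzw.
  assert (M1 := Rmin_l g c). assert (M2 := Rmin_r g c).
  destruct Hz as [-> | ->]; destruct Hw as [-> | ->].
  - assert (Hne : i <> k) by (intros ->; auto). assert (H1 := Cmod_Xs_sub_ge i k Hi Hk' Hne). lra.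
  - assert (H1 := H i k Hi Hk'). lra.
  - rewrite Cmod_minus_sym. assert (H1 := H k i Hk' Hi). lra.
  - assert (Hne : i <> k) by (intros ->; auto). assert (H1 := Cmod_Ys_sub_ge i k Hi Hk' Hne). lra.
Qed.

Lemma family_Re_ge z : in_family z -> lam 1%nat <= Re z.
Proof.
  intros [i [Hi [-> | ->]]]; assert (H := lam_ge_1 i Hi); unfold Xs, Ys; simpl; [|lra].
  assert (Hs : 0 <= fst sigma) by exact Hsigma. lra.
Qed.

Lemma family_Im_le z : in_family z -> Rabs (Im z) <= Rabs (Im sigma).
Proof.
  intros [i [_ [-> | ->]]]; unfold Xs, Ys; simpl.
  - rewrite Rplus_0_l. apply Rle_refl.
  - rewrite Rabs_R0. apply Rabs_pos.
Qed.

Lemma unshifted_spectral_conditions : spectral_sequence_conditions Ys.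
Proof.
  apply spectral_sequence_conditions_intro.
  - intros n m Hn Hm Heq. apply lam_inj; auto. unfold Ys in Heq. injection Heq. auto.
  - exists (lam 1%nat). split; auto. intros n Hn. apply family_Re_ge. exists n; auto.
  - exists (Rabs (Im sigma)). intros n Hn. apply family_Im_le. exists n; auto.
  - apply Cmod_Ys_mono.
  - exists (1 / kappa), (B0 / kappa). split; [apply Rdiv_lt_0_compat; lra|].
    intros n Hn. replace (1 / kappa * sqrt (Cmod (Ys n)) - INR n)
      with ((sqrt (Cmod (Ys n)) - kappa * INR n) / kappa) by (field; lra).
    unfold Rdiv. rewrite Rabs_mult, (Rabs_pos_eq (/ kappa)) by (left; apply Rinv_0_lt_compat; lra).
    apply Rmult_le_compat_r; [left; apply Rinv_0_lt_compat; lra | apply Ys_sqrt_estimate; auto].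
  - exists g. split; auto. apply Cmod_Ys_sub_ge.
Qed.

Lemma merged_family_arrangement : (forall i k, (1 <= i)%nat -> (1 <= k)%nat -> Xs i <> Ys k) ->
  exists Lam : nat -> C, (forall z, (exists n, (1 <= n)%nat /\ Lam n = z) <-> in_family z) /\
    spectral_sequence_conditions Lam.
Proof.
  intros Hdisj. set (B := B0 + sqrt (Cmod sigma)).
  assert (HB : 0 <= B)
    by (eapply Rle_trans; [apply Rabs_pos | apply (Xs_sqrt_estimate 1%nat (le_n 1))]).
  destruct (sorted_merge Xs Ys kappa B) as (Lam & Hr & Hinj & Hm & He); auto.
  - apply Cmod_Xs_mono.
  - apply Cmod_Ys_mono.
  - apply Xs_sqrt_estimate.
  - intros i Hi. assert (H := Ys_sqrt_estimate i Hi). assert (H1 := sqrt_pos (Cmod sigma)).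
    unfold B. lra.
  - intros i i' Hi Hi' E. apply lam_inj; auto. unfold Xs in E.
    apply (f_equal (fun z => Re (Cminus z sigma))) in E. simpl in E. lra.
  - intros i i' Hi Hi' E. apply lam_inj; auto. unfold Ys in E. injection E. auto.
  - exists Lam. split; [exact Hr|].
    assert (Hmem : forall n, (1 <= n)%nat -> in_family (Lam n)) by (intros n Hn; apply Hr; eauto).
    destruct (shifted_family_separated Hdisj) as [c [Hc Hsep]].
    apply spectral_sequence_conditions_intro; auto.
    + exists (lam 1%nat). split; auto. intros n Hn. apply family_Re_ge, Hmem; auto.
    + exists (Rabs (Im sigma)). intros n Hn. apply family_Im_le, Hmem; auto.
    + exists (2 / kappa), (1 + 2 * B / kappa). split; [apply Rdiv_lt_0_compat; lra | auto].
    + exists c. split; [auto|]. intros n m Hn Hm' Hnm.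
      apply Hsep; [apply Hmem; auto | apply Hmem; auto | intros E; apply Hnm, Hinj; auto].
Qed.

Theorem shifted_family_arrangement :
  (forall n l, (1 <= n)%nat -> (1 <= l)%nat -> n <> l -> Xs n <> Ys l) ->
  exists Lam : nat -> C, (forall z, (exists n, (1 <= n)%nat /\ Lam n = z) <-> in_family z) /\
    spectral_sequence_conditions Lam.
Proof.
  intros Hcoll. destruct (Req_dec (Cmod sigma) 0) as [H0|H0].
  - apply Cmod_eq_0 in H0.
    assert (HXY : forall i, Xs i = Ys i) by (intros; unfold Xs, Ys; rewrite H0; ring).
    exists Ys. split; [|apply unshifted_spectral_conditions].
    intros z. split; [intros [n [Hn <-]]; exists n; auto|].
    intros [n [Hn [-> | ->]]]; exists n; auto.
  - apply merged_family_arrangement.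
    intros i k Hi Hk' E. destruct (Nat.eq_dec i k) as [->|Hne]; [|apply (Hcoll i k); auto].
    apply H0. unfold Xs, Ys in E.
    replace sigma with (Cminus (Cplus (RtoC (lam k)) sigma) (RtoC (lam k))) by ring.
    rewrite E. replace (Cminus (RtoC (lam k)) (RtoC (lam k))) with (RtoC 0) by ring. apply Cmod_0.
Qed.
End ShiftedFamily.

Lemma squared_zeros_regular (A : R) (j : nat -> R) (del B : R) :
  0 < A -> 0 < del -> 0 < j 1%nat ->
  (forall k, (1 <= k)%nat -> del <= j (S k) - j k) ->
  (forall n, Rabs (j n - PI * INR n) <= B) ->
  0 < A * j 1%nat ^ 2 /\
  (forall k, (1 <= k)%nat -> A * del * del * INR k <= A * j (S k) ^ 2 - A * j k ^ 2) /\
  (forall n, (1 <= n)%nat -> Rabs (sqrt (A * j n ^ 2) - sqrt A * PI * INR n) <= sqrt A * B).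
Proof.
  intros HA Hdel Hj1 Hgap HB.
  assert (Hlin : forall k, (1 <= k)%nat -> j 1%nat + (INR k - 1) * del <= j k).
  { intros k Hk. induction Hk as [|k Hk IH]; [simpl; lra|].
    rewrite S_INR. assert (H := Hgap k Hk). lra. }
  assert (Hpos : forall k, (1 <= k)%nat -> 0 < j k).
  { intros k Hk. assert (H := Hlin k Hk). assert (H1 := le_INR 1 k Hk). simpl in H1. nra. }
  split; [apply Rmult_lt_0_compat; [auto | apply pow_lt; auto]|]. split.
  - intros k Hk. assert (H1 := Hgap k Hk). assert (H2 := Hlin (S k) ltac:(lia)).
    assert (H3 := Hpos k Hk). rewrite S_INR in H2. replace (INR k + 1 - 1) with (INR k) in H2 by ring.
    replace (A * j (S k) ^ 2 - A * j k ^ 2) with (A * ((j (S k) - j k) * (j (S k) + j k))) by ring.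
    replace (A * del * del * INR k) with (A * (del * (INR k * del))) by ring.
    apply Rmult_le_compat_l; [lra|].
    apply Rmult_le_compat; [lra | apply Rmult_le_pos; [apply pos_INR | lra] | lra | lra].
  - intros n Hn. assert (Hjn := Hpos n Hn).
    rewrite sqrt_mult_alt, sqrt_pow2 by lra.
    replace (sqrt A * j n - sqrt A * PI * INR n) with (sqrt A * (j n - PI * INR n)) by ring.
    rewrite Rabs_mult, Rabs_pos_eq by apply sqrt_pos.
    apply Rmult_le_compat_l; [apply sqrt_pos | auto].
Qed.

Lemma Re_alpha2_minus_alpha1_ge0 a1 a2 : 0 <= Re (Cminus (alpha2 a1 a2) (alpha1 a1 a2)).
Proof.
  unfold alpha1, alpha2. cbv zeta. set (d := a2 ^ 2 + 4 * a1).
  assert (H := sqrt_pos d).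
  destruct (Rlt_dec 0 d); [|destruct (Rlt_dec d 0)]; simpl; lra.
Qed.

Theorem proposition3p5 (alpha mu a1 a2 : R) (j : nat -> R)
  (Halpha : 0 <= alpha < 1)
  (Hmu : mu <= mu_crit alpha)
  (Hj : is_pos_zeros_enum (BesselJ (nu_am alpha mu)) j)
  (Hgap : forall n l : nat, (1 <= n)%nat -> (1 <= l)%nat -> n <> l ->
     RtoC (lambda_am alpha j n - lambda_am alpha j l) <> Cminus (alpha1 a1 a2) (alpha2 a1 a2)) :
  exists Lam : nat -> C,
    (* Lam (n >= 1) enumerates exactly the family *)
    (forall z : C, (exists n, (1 <= n)%nat /\ Lam n = z) <->
       (exists n, (1 <= n)%nat /\
          (z = Cplus (Cminus (RtoC (lambda_am alpha j n)) (alpha1 a1 a2)) (alpha2 a1 a2)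
           \/ z = RtoC (lambda_am alpha j n)))) /\
    (* (1) *)
    (forall n m, (1 <= n)%nat -> (1 <= m)%nat -> n <> m -> Lam n <> Lam m) /\
    (* (2) *)
    (forall n, (1 <= n)%nat -> 0 < Re (Lam n)) /\
    (* (3) *)
    (exists delta, 0 < delta /\
       forall n, (1 <= n)%nat -> Rabs (Im (Lam n)) <= delta * sqrt (Re (Lam n))) /\
    (* (4) *)
    (forall n, (1 <= n)%nat -> Cmod (Lam n) <= Cmod (Lam (S n))) /\
    (* (5) *)
    (exists (rho : R) (q : nat), 0 < rho /\ (1 <= q)%nat /\
       (forall n m, (1 <= n)%nat -> (1 <= m)%nat -> (q <= Nat.max (n - m) (m - n))%nat ->
          Cmod (Cminus (Lam n) (Lam m)) >= rho * Rabs (INR n ^ 2 - INR m ^ 2)) /\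
       (exists c, 0 < c /\
          forall n m, (1 <= n)%nat -> (1 <= m)%nat -> n <> m ->
            (Nat.max (n - m) (m - n) < q)%nat -> c <= Cmod (Cminus (Lam n) (Lam m)))) /\
    (* (6) *)
    (exists p s, 0 < p /\ 0 < s /\
       forall r, 0 < r -> exists N : nat, count_le Lam r N /\
         Rabs (p * sqrt r - INR N) <= s).
Proof.
  assert (Hnu : 0 <= nu_am alpha mu).
  { apply Rmult_le_pos; [left; apply Rdiv_lt_0_compat | apply sqrt_pos]; lra. }
  destruct (BesselJ_zeros_asymptotics _ j Hnu Hj) as [[del [Hdel Hzgap]] [B HB]].
  set (A := ((2 - alpha) / 2) ^ 2). assert (HA : 0 < A) by (apply pow_lt; lra).
  destruct (squared_zeros_regular A j del B HA Hdel (zeros_pos _ _ Hj 1 (le_n 1)) Hzgap HB)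
    as (Hlam1 & Hlgap & Hlest).
  assert (Hg : 0 < A * del * del) by (apply Rmult_lt_0_compat; [apply Rmult_lt_0_compat|]; auto).
  assert (Hk : 0 < sqrt A * PI) by (apply Rmult_lt_0_compat; [apply sqrt_lt_R0; auto | apply PI_RGT_0]).
  set (sigma := Cminus (alpha2 a1 a2) (alpha1 a1 a2)).
  assert (Hcoll : forall n l, (1 <= n)%nat -> (1 <= l)%nat -> n <> l ->
            Cplus (RtoC (lambda_am alpha j n)) sigma <> RtoC (lambda_am alpha j l)).
  { intros n l Hn Hl Hnl E. apply (Hgap n l Hn Hl Hnl).
    rewrite RtoC_minus, <- E. unfold sigma. ring. }
  destruct (shifted_family_arrangement (lambda_am alpha j) _ _ _ sigma Hg Hk Hlam1 Hlgap Hlest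
              (Re_alpha2_minus_alpha1_ge0 a1 a2) Hcoll) as [Lam [Hfam Hcond]].
  assert (Hshift : forall x : R,
            Cplus (Cminus (RtoC x) (alpha1 a1 a2)) (alpha2 a1 a2) = Cplus (RtoC x) sigma)
    by (intros; unfold sigma; ring).
  exists Lam. split; [|exact Hcond].
  intros z. rewrite Hfam. setoid_rewrite Hshift. reflexivity.
Qed.
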